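(* Let $b\ge0$, let $\nu_1,\nu_2>-1$ with $\nu_1-\nu_2=2\ell$ for some positive integer $\ell$, and let $0<a_1\le a_2$. Then the function $$\mu\mapsto\frac{Q_{\mu,\nu_1}(a_1,b)}{Q_{\mu,\nu_2}(a_2,b)}$$ is unimodal on $(0,\infty)$.
   Context: The Nuttall $Q$-function is $Q_{\mu,\nu}(a,b)=\int_b^\infty x^{\mu}e^{-(x^2+a^2)/2}I_\nu(ax)\,dx$ for $a>0$, $b\ge0$, $\nu>-1$, $\mu>0$, where $I_\nu$ is the modified Bessel function of the first kind. A function is unimodal if it changes its direction of monotonicity at most once (monotone functions included). *)

From Stdlib Require Import Reals.
From Coquelicot Require Import Coquelicot.
Open Scope R_scope.

Definition Gamma (s : R) : R :=
  RInt_gen (fun t => Rpower t (s - 1) * exp (- t)) (at_right 0) (Rbar_locally p_infty).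

Definition BesselI (nu z : R) : R :=
  Series (fun k : nat =>
    Rpower (z / 2) (2 * INR k + nu) / (INR (Factorial.fact k) * Gamma (INR k + nu + 1))).

(* The lower endpoint is taken as the limit from the right at b, so that the
   (possibly improper, when b = 0) integral is treated uniformly. *)
Definition NuttallQ (mu nu a b : R) : R :=
  RInt_gen (fun x => Rpower x mu * exp (- (x ^ 2 + a ^ 2) / 2) * BesselI nu (a * x))
    (at_right b) (Rbar_locally p_infty).

(* f is unimodal on the set I: it changes its direction of monotonicity at most
   once (monotone functions included: take c outside / at the ends of I). *)
Definition unimodal_on (f : R -> R) (I : R -> Prop) : Prop :=
  exists c : R,
    ((forall x y, I x -> I y -> x <= y -> y <= c -> f x <= f y) /\
     (forall x y, I x -> I y -> c <= x -> x <= y -> f y <= f x))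
    \/
    ((forall x y, I x -> I y -> x <= y -> y <= c -> f y <= f x) /\
     (forall x y, I x -> I y -> c <= x -> x <= y -> f x <= f y)).

(* Fix [c] and compare [Q_{mu,nu1}(a1,b)] with [c Q_{mu,nu2}(a2,b)]. Their difference is
   [int_b^oo x^mu psi_c(x) dx] with [psi_c(x) = e^{-x^2/2} x^nu2 sum_k d_k x^{2k}], where
   [d_k = e^{-a1^2/2} P_k - c e^{-a2^2/2} Q_k] compares the power series coefficients of
   [I_nu1(a1 x)] (shifted by [l] places, as [nu1 = nu2 + 2 l]) and of [I_nu2(a2 x)]. The
   quotient [P_k / Q_k] vanishes for [k < l] and then has decreasing successive ratios, so
   the indices with [d_k > 0] form an interval.

   Exponential kernels are variation diminishing: when the positivity set of a coefficient
   sequence (or of a function) is an interval, a combination [al e^{-p s} + be e^{q s} - 1],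
   convex in [s], can be chosen with the opposite sign there, which forces the positivity set
   of the transform to be an interval as well. Applied from [k] to [x^2] and then from [x] to
   [mu], this shows that [mu |-> Q_1(mu) - c Q_2(mu)] is never negative between two points where
   it is positive, i.e. the ratio has no strict interior local minimum. The ratio is continuous
   because [mu |-> Q_{mu,nu}(a,b)] is convex, and a continuous function on [(0, oo)] without
   such a valley is unimodal. *)

From Stdlib Require Import Reals Lra Lia Psatz Classical.
From Coquelicot Require Import Coquelicot.
Open Scope R_scope.

Lemma exp_le_exp x y : x <= y -> exp x <= exp y.
Proof. intros [H|H]; [left; now apply exp_increasing | right; now rewrite H]. Qed.

Lemma exp_le_1 x : x <= 0 -> exp x <= 1.
Proof. intros H. rewrite <- exp_0. now apply exp_le_exp. Qed.

Lemma exp_ge_1 x : 0 <= x -> 1 <= exp x.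
Proof. intros H. rewrite <- exp_0. now apply exp_le_exp. Qed.

Lemma Rpower_gt0 x y : 0 < Rpower x y.
Proof. apply exp_pos. Qed.

Lemma ln_le_sub_1 y : 0 < y -> ln y <= y - 1.
Proof. intros Hy. pose proof (exp_ineq1_le (ln y)). rewrite exp_ln in H; lra. Qed.

(* [ln y <= y - 1] at [y = c t / s]. *)
Lemma Rpower_le_exp_mul t s c : 0 < t -> 0 < s -> 0 < c ->
  Rpower t s <= Rpower (s / c) s * exp (c * t).
Proof.
  intros Ht Hs Hc. unfold Rpower. rewrite <- exp_plus. apply exp_le_exp.
  assert (Hsc : 0 < s / c) by (apply Rdiv_lt_0_compat; lra).
  assert (Htcs : 0 < t * c / s) by (apply Rdiv_lt_0_compat; nra).
  assert (E : ln t = ln (s / c) + ln (t * c / s)).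
  { rewrite <- ln_mult by lra. f_equal. field. lra. }
  pose proof (ln_le_sub_1 _ Htcs).
  assert (s * (t * c / s) = c * t) by (field; lra).
  rewrite E. nra.
Qed.

Definition convex_on (D : R -> Prop) (f : R -> R) : Prop :=
  forall x y t, D x -> D y -> 0 <= t <= 1 ->
    f (t * x + (1 - t) * y) <= t * f x + (1 - t) * f y.

Lemma exp_convex : convex_on (fun _ => True) exp.
Proof.
  intros a b t _ _ Ht. set (m := t * a + (1 - t) * b).
  assert (Htan : forall x, exp m * (1 + (x - m)) <= exp x).
  { intros x. replace (exp x) with (exp m * exp (x - m)) by (rewrite <- exp_plus; f_equal; ring).
    apply Rmult_le_compat_l; [left; apply exp_pos | apply exp_ineq1_le]. }
  pose proof (Htan a). pose proof (Htan b).
  assert (t * (exp m * (1 + (a - m))) + (1 - t) * (exp m * (1 + (b - m))) = exp m)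
    by (unfold m; ring).
  nra.
Qed.

Lemma convex_three_point D f x y z : convex_on D f -> D x -> D z ->
  x <= y <= z -> x < z -> (z - x) * f y <= (z - y) * f x + (y - x) * f z.
Proof.
  intros Hf Dx Dz Hy Hxz. set (t := (z - y) / (z - x)).
  assert (Ht : 0 <= t <= 1).
  { unfold t; split; [apply Rdiv_le_0_compat | rewrite <- Rdiv_le_1]; lra. }
  assert (Ey : y = t * x + (1 - t) * z) by (unfold t; field; lra).
  pose proof (Hf x z t Dx Dz Ht) as H. rewrite <- Ey in H.
  apply Rmult_le_compat_l with (r := z - x) in H; [|lra].
  replace ((z - x) * (t * f x + (1 - t) * f z)) with ((z - y) * f x + (y - x) * f z) in H
    by (unfold t; field; lra).
  exact H.
Qed.

Lemma convex_sign_of_zeros f s1 s2 : convex_on (fun _ => True) f -> s1 < s2 ->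
  f s1 = 0 -> f s2 = 0 ->
  forall s, (s1 <= s <= s2 -> f s <= 0) /\ (s <= s1 \/ s2 <= s -> 0 <= f s).
Proof.
  intros Hf H12 Z1 Z2 s. split.
  - intros Hs. pose proof (convex_three_point _ f s1 s s2 Hf I I Hs H12). nra.
  - intros [Hs|Hs].
    + pose proof (convex_three_point _ f s s1 s2 Hf I I (conj Hs (Rlt_le _ _ H12)) ltac:(lra)).
      nra.
    + pose proof (convex_three_point _ f s1 s2 s Hf I I (conj (Rlt_le _ _ H12) Hs) ltac:(lra)).
      nra.
Qed.

Lemma convex_local_bound D f x0 d h : convex_on D f -> 0 < d ->
  (forall y, Rabs (y - x0) <= d -> D y) -> Rabs h <= d ->
  d * Rabs (f (x0 + h) - f x0) <=
    Rmax (Rabs (f (x0 - d) - f x0)) (Rabs (f (x0 + d) - f x0)) * Rabs h.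
Proof.
  intros Hf Hd HD Hh.
  set (K := Rmax (Rabs (f (x0 - d) - f x0)) (Rabs (f (x0 + d) - f x0))).
  assert (Km : Rabs (f (x0 - d) - f x0) <= K) by apply Rmax_l.
  assert (Kp : Rabs (f (x0 + d) - f x0) <= K) by apply Rmax_r.
  apply Rabs_le_between in Km, Kp.
  assert (Dm : D (x0 - d)) by (apply HD; rewrite Rabs_left1; lra).
  assert (Dp : D (x0 + d)) by (apply HD; rewrite Rabs_right; lra).
  assert (D0 : D x0) by (apply HD; replace (x0 - x0) with 0 by ring; rewrite Rabs_R0; lra).
  assert (Dh : D (x0 + h)) by (apply HD; now replace (x0 + h - x0) with h by ring).
  destruct (Rle_or_lt 0 h) as [Hp|Hn].
  - rewrite (Rabs_right h) in Hh |- * by lra.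
    pose proof (convex_three_point D f x0 (x0 + h) (x0 + d) Hf D0 Dp ltac:(lra) ltac:(lra)).
    pose proof (convex_three_point D f (x0 - d) x0 (x0 + h) Hf Dm Dh ltac:(lra) ltac:(lra)).
    assert (- (K * h) <= d * (f (x0 + h) - f x0) <= K * h) by (split; nra).
    unfold Rabs at 1; destruct (Rcase_abs _); nra.
  - rewrite (Rabs_left h) in Hh |- * by lra.
    pose proof (convex_three_point D f (x0 - d) (x0 + h) x0 Hf Dm D0 ltac:(lra) ltac:(lra)).
    pose proof (convex_three_point D f (x0 + h) x0 (x0 + d) Hf Dh Dp ltac:(lra) ltac:(lra)).
    assert (K * h <= d * (f (x0 + h) - f x0) <= - (K * h)) by (split; nra).
    unfold Rabs at 1; destruct (Rcase_abs _); nra.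
Qed.

Lemma convex_continuous D f x0 d : convex_on D f -> 0 < d ->
  (forall y, Rabs (y - x0) <= d -> D y) -> continuous f x0.
Proof.
  intros Hf Hd HD. apply (filterlim_locally (F := locally x0)). intros eps.
  set (K := Rmax (Rabs (f (x0 - d) - f x0)) (Rabs (f (x0 + d) - f x0))).
  assert (HK : 0 <= K) by (eapply Rle_trans; [apply Rabs_pos | apply Rmax_l]).
  assert (He : 0 < eps) by apply cond_pos.
  set (delta := Rmin d (eps * d / (K + 1))).
  assert (Hdelta : 0 < delta).
  { apply Rmin_glb_lt; [lra | apply Rdiv_lt_0_compat; nra]. }
  exists (mkposreal delta Hdelta). intros y Hy. change R in y. change (Rabs (y - x0) < delta) in Hy.
  change (Rabs (f y - f x0) < eps).
  assert (Hd1 : delta <= d) by apply Rmin_l.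
  assert (Hd2 : delta * (K + 1) <= eps * d).
  { apply Rle_trans with (eps * d / (K + 1) * (K + 1)); [|right; field; lra].
    apply Rmult_le_compat_r; [lra | apply Rmin_r]. }
  pose proof (convex_local_bound D f x0 d (y - x0) Hf Hd HD ltac:(lra)) as B.
  replace (x0 + (y - x0)) with y in B by ring. fold K in B.
  pose proof (Rabs_pos (y - x0)). nra.
Qed.

Definition exp_comb (al be p q s : R) : R := al * exp (- p * s) + be * exp (q * s) - 1.

Lemma exp_comb_convex al be p q : 0 <= al -> 0 <= be ->
  convex_on (fun _ => True) (exp_comb al be p q).
Proof.
  intros Hal Hbe x y t _ _ Ht. unfold exp_comb.
  replace (- p * (t * x + (1 - t) * y)) with (t * (- p * x) + (1 - t) * (- p * y)) by ring.
  replace (q * (t * x + (1 - t) * y)) with (t * (q * x) + (1 - t) * (q * y)) by ring.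
  pose proof (exp_convex (- p * x) (- p * y) t I I Ht).
  pose proof (exp_convex (q * x) (q * y) t I I Ht).
  nra.
Qed.

Lemma exp_comb_factor al be t1 t2 t3 s :
  al * exp (t1 * s) - exp (t2 * s) + be * exp (t3 * s) =
  exp (t2 * s) * exp_comb al be (t2 - t1) (t3 - t2) s.
Proof.
  unfold exp_comb.
  replace (exp (t1 * s)) with (exp (t2 * s) * exp (- (t2 - t1) * s))
    by (rewrite <- exp_plus; f_equal; ring).
  replace (exp (t3 * s)) with (exp (t2 * s) * exp ((t3 - t2) * s))
    by (rewrite <- exp_plus; f_equal; ring).
  ring.
Qed.

Lemma exp_comb_zeros p q s1 s2 : 0 < p -> 0 < q -> s1 < s2 ->
  exists al be, 0 < al /\ 0 < be /\ exp_comb al be p q s1 = 0 /\ exp_comb al be p q s2 = 0.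
Proof.
  intros Hp Hq H12.
  set (A1 := exp (- p * s1)). set (A2 := exp (- p * s2)).
  set (B1 := exp (q * s1)). set (B2 := exp (q * s2)).
  assert (HA : A2 < A1) by (apply exp_increasing; nra).
  assert (HB : B1 < B2) by (apply exp_increasing; nra).
  assert (0 < A2) by apply exp_pos. assert (0 < B1) by apply exp_pos.
  set (det := A1 * B2 - A2 * B1).
  assert (Hdet : 0 < det) by (unfold det; nra).
  exists ((B2 - B1) / det), ((A1 - A2) / det).
  repeat split; try (apply Rdiv_lt_0_compat; lra);
    unfold exp_comb; fold A1 A2 B1 B2; unfold det in *; field; lra.
Qed.

(* An infinite end of the interval is matched by dropping the corresponding exponential. *)
Lemma exp_comb_separator p q (s1 s2 : Rbar) : 0 < p -> 0 < q -> Rbar_lt s1 s2 ->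
  exists al be, 0 <= al /\ (s1 <> m_infty -> 0 < al) /\ 0 <= be /\
    forall s : R, (Rbar_le s1 s -> Rbar_le s s2 -> exp_comb al be p q s <= 0) /\
                  (Rbar_le s s1 \/ Rbar_le s2 s -> 0 <= exp_comb al be p q s).
Proof.
  intros Hp Hq H12.
  destruct s1 as [x1| |], s2 as [x2| |]; simpl in H12 |- *; try contradiction.
  - destruct (exp_comb_zeros p q x1 x2 Hp Hq H12) as (al & be & Hal & Hbe & Z1 & Z2).
    exists al, be. do 3 (split; [lra|]). intros s.
    destruct (convex_sign_of_zeros _ x1 x2 (exp_comb_convex al be p q ltac:(lra) ltac:(lra))
      H12 Z1 Z2 s) as [Hin Hout].
    split; [intros; apply Hin; lra | exact Hout].
  - exists (exp (p * x1)), 0.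
    split; [left; apply exp_pos|]. split; [intros; apply exp_pos|]. split; [lra|].
    intros s. unfold exp_comb. rewrite Rmult_0_l, Rplus_0_r, <- exp_plus. split.
    + intros Hs _. pose proof (exp_le_1 (p * x1 + - p * s) ltac:(nra)). lra.
    + intros [Hs|[]]. pose proof (exp_ge_1 (p * x1 + - p * s) ltac:(nra)). lra.
  - exists 0, (exp (- q * x2)).
    split; [lra|]. split; [tauto|]. split; [left; apply exp_pos|].
    intros s. unfold exp_comb. rewrite Rmult_0_l, Rplus_0_l, <- exp_plus. split.
    + intros _ Hs. pose proof (exp_le_1 (- q * x2 + q * s) ltac:(nra)). lra.
    + intros [[]|Hs]. pose proof (exp_ge_1 (- q * x2 + q * s) ltac:(nra)). lra.
  - exists 0, 0. split; [lra|]. split; [tauto|]. split; [lra|].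
    intros s. unfold exp_comb. split; [intros; lra | intros [[]|[]]].
Qed.

Lemma exp_comb_opposes_sign p q (s1 s2 : Rbar) : 0 < p -> 0 < q -> Rbar_lt s1 s2 ->
  exists al be, 0 <= al /\ (s1 <> m_infty -> 0 < al) /\ 0 <= be /\
    forall s y : R, (0 < y <-> Rbar_lt s1 s /\ Rbar_lt s s2) -> exp_comb al be p q s * y <= 0.
Proof.
  intros Hp Hq H12.
  destruct (exp_comb_separator p q s1 s2 Hp Hq H12) as (al & be & Hal & Hal' & Hbe & Hsep).
  exists al, be. do 3 (split; [assumption|]). intros s y Hy.
  destruct (Hsep s) as [Hin Hout]. destruct (Rlt_or_le 0 y) as [Hpos|Hneg].
  - destruct (proj1 Hy Hpos) as [H1 H2].
    pose proof (Hin (Rbar_lt_le _ _ H1) (Rbar_lt_le _ _ H2)). nra.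
  - assert (Hnot : ~ (Rbar_lt s1 s /\ Rbar_lt s s2)) by (intros H; apply Hy in H; lra).
    assert (Rbar_le s s1 \/ Rbar_le s2 s).
    { destruct (Rbar_lt_le_dec s1 s) as [H1|H1]; [right|left; exact H1].
      apply Rbar_not_lt_le. intros H2. exact (Hnot (conj H1 H2)). }
    pose proof (Hout H). nra.
Qed.

Definition order_convex (S : R -> Prop) : Prop :=
  forall r s t, r < s < t -> S r -> S t -> S s.

Lemma Glb_Rbar_lt_witness (S : R -> Prop) (s : R) :
  Rbar_lt (Glb_Rbar S) s -> exists r, S r /\ r < s.
Proof.
  intros H. apply NNPP. intros Hn. apply (Rbar_lt_not_le _ _ H).
  apply (proj2 (Glb_Rbar_correct S)). intros r Hr. simpl.
  apply Rnot_lt_le. intros Hrs. exact (Hn (ex_intro _ r (conj Hr Hrs))).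
Qed.

Lemma Lub_Rbar_gt_witness (S : R -> Prop) (s : R) :
  Rbar_lt s (Lub_Rbar S) -> exists t, S t /\ s < t.
Proof.
  intros H. apply NNPP. intros Hn. apply (Rbar_lt_not_le _ _ H).
  apply (proj2 (Lub_Rbar_correct S)). intros t Ht. simpl.
  apply Rnot_lt_le. intros Hst. exact (Hn (ex_intro _ t (conj Ht Hst))).
Qed.

Lemma open_order_convex_interval (S : R -> Prop) :
  (forall s, S s -> exists r t, r < s < t /\ S r /\ S t) -> order_convex S ->
  (exists s, S s) ->
  exists s1 s2 : Rbar, Rbar_lt s1 s2 /\ forall s, S s <-> Rbar_lt s1 s /\ Rbar_lt s s2.
Proof.
  intros Hopen Hconv [s0 Hs0].
  assert (Hin : forall s, S s -> Rbar_lt (Glb_Rbar S) s /\ Rbar_lt s (Lub_Rbar S)).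
  { intros s Hs. destruct (Hopen s Hs) as (r & t & Hrst & Hr & Ht). split.
    - apply Rbar_le_lt_trans with r; [exact (proj1 (Glb_Rbar_correct S) r Hr) | exact (proj1 Hrst)].
    - apply Rbar_lt_le_trans with t; [exact (proj2 Hrst) | exact (proj1 (Lub_Rbar_correct S) t Ht)]. }
  exists (Glb_Rbar S), (Lub_Rbar S). split.
  - destruct (Hin s0 Hs0). now apply Rbar_lt_trans with s0.
  - intros s. split; [apply Hin|]. intros [H1 H2].
    destruct (Glb_Rbar_lt_witness S s H1) as (r & Hr & Hrs).
    destruct (Lub_Rbar_gt_witness S s H2) as (t & Ht & Hst).
    exact (Hconv r s t (conj Hrs Hst) Hr Ht).
Qed.

Lemma nat_le_of_INR_lt i k : INR i < INR k + 1 -> (i <= k)%nat.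
Proof.
  intros H. destruct (Nat.le_gt_cases i k) as [|Hki]; [assumption|].
  apply le_INR in Hki. rewrite S_INR in Hki. lra.
Qed.

(* A convex set of naturals, thickened by [1/2] on each side, is an open convex
   subset of the reals with the same trace on [nat]. *)
Lemma nat_convex_interval (P : nat -> Prop) :
  (forall i j k, (i <= j <= k)%nat -> P i -> P k -> P j) -> (exists k, P k) ->
  exists (s1 : R) (s2 : Rbar), Rbar_lt s1 s2 /\
    forall k, P k <-> s1 < INR k /\ Rbar_lt (INR k) s2.
Proof.
  intros Hconv [k0 Hk0].
  set (S := fun s => exists i k, P i /\ P k /\ INR i - 1/2 < s < INR k + 1/2).
  assert (HS : forall k, P k <-> S (INR k)).
  { intros k. split; [intros Hk; exists k, k; repeat split; auto; lra|].
    intros (i & m & Hi & Hm & H1 & H2).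
    apply (Hconv i k m); [split; apply nat_le_of_INR_lt; lra | assumption | assumption]. }
  destruct (open_order_convex_interval S) as (s1 & s2 & H12 & Hiff).
  - intros s (i & k & Hi & Hk & H1 & H2).
    exists ((INR i - 1/2 + s) / 2), ((s + INR k + 1/2) / 2).
    split; [lra|]. split; exists i, k; repeat split; auto; lra.
  - intros r s t Hrst (i & _ & Hi & _ & Hr & _) (_ & k & _ & Hk & _ & Ht).
    exists i, k; repeat split; auto; lra.
  - exists (INR k0). now apply HS.
  - assert (Hlow : forall s, S s -> -1 < s).
    { intros s (i & _ & _ & _ & Hs & _). pose proof (pos_INR i). lra. }
    destruct s1 as [x1| |]; [| contradiction |].
    + exists x1, s2. split; [exact H12|]. intros k. rewrite HS. apply Hiff.
    + exfalso. assert (HSm1 : S (-1)).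
      { apply Hiff. split; [exact I|]. destruct (proj1 (Hiff _) (proj1 (HS k0) Hk0)) as [_ H].
        apply Rbar_le_lt_trans with (INR k0); [simpl; pose proof (pos_INR k0); lra | exact H]. }
      pose proof (Hlow _ HSm1). lra.
Qed.

Lemma Series_nonneg (a : nat -> R) : ex_series a -> (forall n, 0 <= a n) -> 0 <= Series a.
Proof.
  intros Hex Ha. rewrite <- (Rmult_0_l (Series a)), <- Series_scal_l.
  apply Series_le; [intros n; specialize (Ha n); lra | exact Hex].
Qed.

Lemma Series_nonpos (a : nat -> R) : ex_series a -> (forall n, a n <= 0) -> Series a <= 0.
Proof.
  intros Hex Ha.
  assert (H : 0 <= Series (fun n => - a n)).
  { apply Series_nonneg; [|intros n; specialize (Ha n); lra].
    apply (ex_series_opp (K := R_AbsRing) (V := R_NormedModule)), Hex. }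
  rewrite Series_opp in H. lra.
Qed.

Lemma ex_series_lin3 (u v w : nat -> R) al be :
  ex_series u -> ex_series v -> ex_series w ->
  ex_series (fun k => al * u k - v k + be * w k).
Proof.
  intros Hu Hv Hw.
  apply (ex_series_plus (K := R_AbsRing) (V := R_NormedModule)).
  - apply (ex_series_minus (K := R_AbsRing) (V := R_NormedModule)); [|exact Hv].
    apply (ex_series_scal_l (K := R_AbsRing) (V := R_NormedModule)), Hu.
  - apply (ex_series_scal_l (K := R_AbsRing) (V := R_NormedModule)), Hw.
Qed.

Lemma Series_lin3 (u v w : nat -> R) al be :
  ex_series u -> ex_series v -> ex_series w ->
  Series (fun k => al * u k - v k + be * w k) = al * Series u - Series v + be * Series w.
Proof.
  intros Hu Hv Hw.
  rewrite Series_plus, Series_minus, !Series_scal_l; try reflexivity.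
  - apply (ex_series_scal_l (K := R_AbsRing) (V := R_NormedModule)), Hu.
  - exact Hv.
  - apply (ex_series_minus (K := R_AbsRing) (V := R_NormedModule)); [|exact Hv].
    apply (ex_series_scal_l (K := R_AbsRing) (V := R_NormedModule)), Hu.
  - apply (ex_series_scal_l (K := R_AbsRing) (V := R_NormedModule)), Hw.
Qed.

Section PowerSeriesSign.

Variable d : nat -> R.
Hypothesis d_pos_convex : forall i j k, (i <= j <= k)%nat -> 0 < d i -> 0 < d k -> 0 < d j.
Hypothesis d_summable : forall y, 0 < y -> ex_series (fun k => d k * y ^ k).

(* With [y^k = e^{k ln y}], [al y1^k - y2^k + be y3^k] is [y2^k] times an [exp_comb]
   in [k] whose sign opposes that of [d k]; summing gives a contradiction. *)
Lemma power_series_pos_convex y1 y2 y3 : 0 < y1 -> y1 < y2 < y3 ->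
  0 < Series (fun k => d k * y1 ^ k) -> 0 < Series (fun k => d k * y3 ^ k) ->
  0 < Series (fun k => d k * y2 ^ k).
Proof.
  intros Hy1 [H12 H23] P1 P3. apply Rnot_le_lt. intros P2.
  destruct (classic (exists k, 0 < d k)) as [Hpos|Hnone].
  2: { assert (Series (fun k => d k * y1 ^ k) <= 0); [|lra].
       apply Series_nonpos; [now apply d_summable|]. intros k.
       assert (d k <= 0) by (apply Rnot_lt_le; intros h; apply Hnone; now exists k).
       pose proof (pow_lt y1 k Hy1). nra. }
  destruct (nat_convex_interval (fun k => 0 < d k) d_pos_convex Hpos) as (s1 & s2 & H12' & Hiff).
  set (p := ln y2 - ln y1). set (q := ln y3 - ln y2).
  assert (Hp : 0 < p) by (unfold p; pose proof (ln_increasing y1 y2 Hy1 H12); lra).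
  assert (Hq : 0 < q) by (unfold q; pose proof (ln_increasing y2 y3 ltac:(lra) H23); lra).
  destruct (exp_comb_opposes_sign p q s1 s2 Hp Hq H12') as (al & be & _ & Hal & Hbe & Hv).
  specialize (Hal ltac:(discriminate)).
  assert (Hpow : forall y k, 0 < y -> y ^ k = exp (ln y * INR k)).
  { intros y k Hy. rewrite <- Rpower_pow by exact Hy. unfold Rpower. now rewrite Rmult_comm. }
  assert (Hterm : forall k, d k * (al * y1 ^ k - y2 ^ k + be * y3 ^ k) <= 0).
  { intros k. rewrite !Hpow, exp_comb_factor by lra. fold p q.
    specialize (Hv (INR k) (d k) (Hiff k)). pose proof (exp_pos (ln y2 * INR k)). nra. }
  assert (Hcomb : forall k, d k * (al * y1 ^ k - y2 ^ k + be * y3 ^ k) =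
    al * (d k * y1 ^ k) - d k * y2 ^ k + be * (d k * y3 ^ k)) by (intros; ring).
  assert (Hle : Series (fun k => al * (d k * y1 ^ k) - d k * y2 ^ k + be * (d k * y3 ^ k)) <= 0).
  { apply Series_nonpos; [apply ex_series_lin3; apply d_summable; lra|].
    intros k. rewrite <- Hcomb. apply Hterm. }
  rewrite Series_lin3 in Hle by (apply d_summable; lra).
  nra.
Qed.

End PowerSeriesSign.

Lemma filter_prod_at_right_pinfty (P : R * R -> Prop) b :
  (forall x y, b < x < b + 1 -> b + 1 < y -> P (x, y)) ->
  filter_prod (at_right b) (Rbar_locally p_infty) P.
Proof.
  intros H. apply Filter_prod with (Q := fun x => b < x < b + 1) (R := fun y => b + 1 < y).
  - exists (mkposreal 1 Rlt_0_1). intros y Hy Hby. split; [exact Hby|].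
    change (Rabs (y - b) < 1) in Hy. apply Rabs_lt_between in Hy. lra.
  - exists (b + 1). now intros.
  - intros x y Hx Hy. now apply H.
Qed.

Lemma is_RInt_gen_nonpos (h : R -> R) b L :
  is_RInt_gen h (at_right b) (Rbar_locally p_infty) L ->
  (forall x, b < x -> h x <= 0) -> L <= 0.
Proof.
  intros H Hn.
  assert (F1 : filter_prod (at_right b) (Rbar_locally p_infty) (fun ab => fst ab <= snd ab)).
  { apply filter_prod_at_right_pinfty. intros; simpl; lra. }
  assert (F2 : filter_prod (at_right b) (Rbar_locally p_infty)
     (fun ab => forall x, fst ab <= x <= snd ab -> norm (h x) <= opp (h x))).
  { apply filter_prod_at_right_pinfty. intros x y Hx Hy z Hz. simpl in Hz.
    assert (h z <= 0) by (apply Hn; lra).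
    change (Rabs (h z) <= - h z). rewrite Rabs_left1; lra. }
  pose proof (RInt_gen_norm (V := R_CompleteNormedModule) h (fun y => opp (h y)) L (opp L)
    F1 F2 H (is_RInt_gen_opp h L H)) as HL.
  change (Rabs L <= - L) in HL. pose proof (Rle_abs L). lra.
Qed.

Lemma is_RInt_gen_lin3 (f1 f2 f3 : R -> R) b L1 L2 L3 al be :
  is_RInt_gen f1 (at_right b) (Rbar_locally p_infty) L1 ->
  is_RInt_gen f2 (at_right b) (Rbar_locally p_infty) L2 ->
  is_RInt_gen f3 (at_right b) (Rbar_locally p_infty) L3 ->
  is_RInt_gen (fun x => al * f1 x - f2 x + be * f3 x) (at_right b) (Rbar_locally p_infty)
    (al * L1 - L2 + be * L3).
Proof.
  intros H1 H2 H3.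
  exact (is_RInt_gen_plus _ _ _ _
    (is_RInt_gen_minus _ _ _ _ (is_RInt_gen_scal _ al _ H1) H2) (is_RInt_gen_scal _ be _ H3)).
Qed.

Lemma continuous_pos_near (f : R -> R) x : continuous f x -> 0 < f x ->
  exists e, 0 < e /\ forall y, Rabs (y - x) < e -> 0 < f y.
Proof.
  intros Hc Hx.
  destruct (proj1 (filterlim_locally (F := locally x) f (f x)) Hc (mkposreal _ Hx)) as [e He].
  exists e. split; [apply cond_pos|]. intros y Hy.
  specialize (He y Hy). change (Rabs (f y - f x) < f x) in He.
  apply Rabs_lt_between in He. lra.
Qed.

Section MellinSign.

Variables (b : R) (g J : R -> R).
Hypothesis b_nonneg : 0 <= b.
Hypothesis g_cont : forall x, b < x -> continuous g x.
Hypothesis g_pos_convex : forall x y z, b < x -> x < y < z -> 0 < g x -> 0 < g z -> 0 < g y.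
Hypothesis J_int : forall m, 0 < m ->
  is_RInt_gen (fun x => Rpower x m * g x) (at_right b) (Rbar_locally p_infty) (J m).

Let S s := b < exp s /\ 0 < g (exp s).

Lemma mellin_pos_set_open s : S s -> exists r t, r < s < t /\ S r /\ S t.
Proof.
  intros [Hb Hg].
  assert (Hc : continuous (fun s => g (exp s)) s).
  { apply (continuous_comp exp g); [|now apply g_cont].
    apply (ex_derive_continuous (K := R_AbsRing) (V := R_NormedModule)). auto_derive. auto. }
  assert (He : continuous (fun s => exp s - b) s).
  { apply (ex_derive_continuous (K := R_AbsRing) (V := R_NormedModule)). auto_derive. auto. }
  destruct (continuous_pos_near _ s Hc Hg) as (e1 & He1 & H1).
  destruct (continuous_pos_near _ s He ltac:(lra)) as (e2 & He2 & H2).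
  set (e := Rmin e1 e2 / 2).
  assert (Hm : 0 < Rmin e1 e2) by (apply Rmin_glb_lt; lra).
  pose proof (Rmin_l e1 e2). pose proof (Rmin_r e1 e2).
  assert (HS : forall y, Rabs (y - s) < Rmin e1 e2 -> S y).
  { intros y Hy. split; [pose proof (H2 y ltac:(lra)); lra | apply H1; lra]. }
  exists (s - e), (s + e). unfold e. split; [lra|].
  split; apply HS; [rewrite Rabs_left1 | rewrite Rabs_right]; lra.
Qed.

Lemma mellin_pos_set_convex : order_convex S.
Proof.
  intros r s t [Hrs Hst] [Hr Pr] [_ Pt].
  pose proof (exp_increasing _ _ Hrs). pose proof (exp_increasing _ _ Hst).
  split; [lra|]. apply (g_pos_convex (exp r) (exp s) (exp t)); auto; lra.
Qed.

(* The argument of [power_series_pos_convex], with integrals in place of sums and the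
   variable [s = ln x] in place of [k]. *)
Lemma mellin_no_negative_dip m1 m2 m3 : 0 < m1 -> m1 < m2 < m3 ->
  0 < J m1 -> 0 < J m3 -> 0 <= J m2.
Proof.
  intros Hm1 [H12 H23] P1 P3. apply Rnot_lt_le. intros N2.
  destruct (classic (exists s, S s)) as [HS|HS].
  2: { assert (J m1 <= 0); [|lra].
       apply (is_RInt_gen_nonpos _ b _ (J_int m1 Hm1)). intros x Hx.
       assert (g x <= 0).
       { apply Rnot_lt_le. intros h. apply HS. exists (ln x). unfold S. now rewrite exp_ln by lra. }
       pose proof (Rpower_gt0 x m1). nra. }
  destruct (open_order_convex_interval S mellin_pos_set_open mellin_pos_set_convex HS)
    as (s1 & s2 & H12' & Hiff).
  destruct (exp_comb_opposes_sign (m2 - m1) (m3 - m2) s1 s2 ltac:(lra) ltac:(lra) H12')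
    as (al & be & Hal & _ & Hbe & Hv).
  assert (Hint := is_RInt_gen_lin3 _ _ _ b _ _ _ al be
    (J_int m1 Hm1) (J_int m2 ltac:(lra)) (J_int m3 ltac:(lra))).
  apply is_RInt_gen_nonpos in Hint; [nra|].
  intros x Hx.
  replace (al * (Rpower x m1 * g x) - Rpower x m2 * g x + be * (Rpower x m3 * g x))
    with ((al * exp (m1 * ln x) - exp (m2 * ln x) + be * exp (m3 * ln x)) * g x)
    by (unfold Rpower; ring).
  rewrite exp_comb_factor.
  assert (Hsign : 0 < g x <-> Rbar_lt s1 (ln x) /\ Rbar_lt (ln x) s2).
  { rewrite <- Hiff. unfold S. rewrite exp_ln by lra. tauto. }
  specialize (Hv (ln x) (g x) Hsign). pose proof (exp_pos (m2 * ln x)). nra.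
Qed.

End MellinSign.

Lemma ex_RInt_right_of (f : R -> R) b x y : (forall z, b < z -> continuous f z) ->
  b < x -> x <= y -> ex_RInt f x y.
Proof.
  intros Hc Hx Hxy. apply (ex_RInt_continuous (V := R_CompleteNormedModule)). intros z Hz.
  apply Hc. rewrite Rmin_left in Hz; lra.
Qed.

Lemma RInt_nonneg_mono (f : R -> R) b x x0 y0 y : (forall z, b < z -> continuous f z) ->
  (forall z, b < z -> 0 <= f z) -> b < x -> x <= x0 -> x0 <= y0 -> y0 <= y ->
  RInt f x0 y0 <= RInt f x y.
Proof.
  intros Hc Hp Hx H1 H2 H3.
  assert (Hex : forall u v, x <= u -> u <= v -> ex_RInt f u v)
    by (intros; apply (ex_RInt_right_of f b); auto; lra).
  assert (Hpos : forall u v, x <= u -> u <= v -> 0 <= RInt f u v)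
    by (intros u v Hu Huv; apply RInt_ge_0; [exact Huv | now apply Hex | intros; apply Hp; lra]).
  pose proof (RInt_Chasles f x x0 y (Hex x x0 ltac:(lra) H1) (Hex x0 y H1 ltac:(lra))) as C1.
  pose proof (RInt_Chasles f x0 y0 y (Hex x0 y0 H1 H2) (Hex y0 y ltac:(lra) H3)) as C2.
  pose proof (Hpos x x0 ltac:(lra) H1). pose proof (Hpos y0 y ltac:(lra) H3).
  change (RInt f x x0 + RInt f x0 y = RInt f x y) in C1.
  change (RInt f x0 y0 + RInt f y0 y = RInt f x0 y) in C2.
  lra.
Qed.

(* The improper integral is the supremum of the proper ones. *)
Lemma is_RInt_gen_nonneg_bounded (f : R -> R) (b M : R) :
  (forall x, b < x -> continuous f x) -> (forall x, b < x -> 0 <= f x) ->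
  (forall x y, b < x -> x <= y -> RInt f x y <= M) ->
  exists L, is_RInt_gen f (at_right b) (Rbar_locally p_infty) L /\
    (forall x y, b < x -> x <= y -> RInt f x y <= L).
Proof.
  intros Hc Hp HM.
  set (E := fun v => exists x y, b < x /\ x <= y /\ v = RInt f x y).
  assert (Hb : bound E) by (exists M; intros v (x & y & H1 & H2 & ->); now apply HM).
  assert (He : exists v, E v) by (exists (RInt f (b + 1) (b + 1)), (b + 1), (b + 1); repeat split; lra).
  destruct (completeness E Hb He) as [L [HL1 HL2]].
  assert (Hup : forall x y, b < x -> x <= y -> RInt f x y <= L)
    by (intros x y Hx Hy; apply HL1; exists x, y; repeat split; lra).
  exists L. split; [|exact Hup].
  intros P [eps HP].
  assert (Hex : exists x0 y0, b < x0 /\ x0 <= y0 /\ L - eps < RInt f x0 y0).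
  { apply NNPP. intros Hn. assert (L <= L - eps); [|pose proof (cond_pos eps); lra].
    apply HL2. intros v (x & y & H1 & H2 & ->). apply Rnot_lt_le. intros h.
    apply Hn. exists x, y. repeat split; lra. }
  destruct Hex as (x0 & y0 & Hx0 & Hxy0 & Hgt).
  apply Filter_prod with (Q := fun x => b < x < x0) (R := fun y => y0 < y).
  - exists (mkposreal (x0 - b) ltac:(lra)). intros y Hy Hby. split; [exact Hby|].
    change (Rabs (y - b) < x0 - b) in Hy. apply Rabs_lt_between in Hy. lra.
  - exists y0. now intros.
  - intros x y [Hx1 Hx2] Hy. exists (RInt f x y). split.
    + apply (RInt_correct (V := R_CompleteNormedModule)).
      apply (ex_RInt_right_of f b); [exact Hc | lra | lra].
    + apply HP. change (Rabs (RInt f x y - L) < eps).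
      pose proof (RInt_nonneg_mono f b x x0 y0 y Hc Hp Hx1 ltac:(lra) Hxy0 ltac:(lra)).
      pose proof (Hup x y Hx1 ltac:(lra)).
      apply Rabs_lt_between. lra.
Qed.

(* The log-logistic density: integrable on [(0, oo)], with polynomial tails of any prescribed
   order, hence a convenient majorant. *)
Definition loglogistic_cdf (q x : R) : R := 1 - / (1 + Rpower x q).
Definition loglogistic_pdf (q x : R) : R := q * Rpower x (q - 1) / (1 + Rpower x q) ^ 2.

Lemma loglogistic_cdf_derive q x : 0 < x ->
  is_derive (loglogistic_cdf q) x (loglogistic_pdf q x).
Proof.
  intros Hx. unfold loglogistic_cdf, loglogistic_pdf, Rpower.
  pose proof (exp_pos (q * ln x)).
  auto_derive; [repeat split; lra|].
  replace ((q - 1) * ln x) with (q * ln x + - ln x) by ring.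
  rewrite exp_plus, exp_Ropp, exp_ln by lra. field. lra.
Qed.

Lemma loglogistic_pdf_continuous q x : 0 < x -> continuous (loglogistic_pdf q) x.
Proof.
  intros Hx. apply (ex_derive_continuous (K := R_AbsRing) (V := R_NormedModule)).
  unfold loglogistic_pdf, Rpower. pose proof (exp_pos (q * ln x)).
  auto_derive. repeat split; try lra. nra.
Qed.

Lemma loglogistic_cdf_bounds q x : 0 <= loglogistic_cdf q x < 1.
Proof.
  unfold loglogistic_cdf. pose proof (Rpower_gt0 x q).
  assert (0 < / (1 + Rpower x q)) by (apply Rinv_0_lt_compat; lra).
  assert (/ (1 + Rpower x q) <= 1) by (rewrite <- Rinv_1; apply Rinv_le_contravar; lra).
  lra.
Qed.

Lemma RInt_le_of_loglogistic_bound (f : R -> R) b q M : 0 <= b -> 0 <= M ->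
  (forall x, b < x -> continuous f x) ->
  (forall x, b < x -> f x <= M * loglogistic_pdf q x) ->
  forall x y, b < x -> x <= y -> RInt f x y <= M.
Proof.
  intros Hb HM Hc Hf x y Hx Hxy.
  assert (Hg : is_RInt (fun t => M * loglogistic_pdf q t) x y
                 (M * (loglogistic_cdf q y - loglogistic_cdf q x))).
  { apply (is_RInt_scal (V := R_NormedModule)).
    apply (is_RInt_derive (V := R_CompleteNormedModule) (loglogistic_cdf q)).
    - intros z Hz. rewrite Rmin_left in Hz by lra. apply loglogistic_cdf_derive. lra.
    - intros z Hz. rewrite Rmin_left in Hz by lra. apply loglogistic_pdf_continuous. lra. }
  apply Rle_trans with (M * (loglogistic_cdf q y - loglogistic_cdf q x)).
  - rewrite <- (is_RInt_unique _ _ _ _ Hg).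
    apply RInt_le; [lra | apply (ex_RInt_right_of f b); [exact Hc | lra | lra] | eexists; exact Hg |].
    intros z Hz. apply Hf. lra.
  - pose proof (loglogistic_cdf_bounds q x). pose proof (loglogistic_cdf_bounds q y). nra.
Qed.

Lemma is_RInt_gen_pos_of_loglogistic_bound (f : R -> R) b q M : 0 <= b -> 0 <= M ->
  (forall x, b < x -> continuous f x) -> (forall x, b < x -> 0 < f x) ->
  (forall x, b < x -> f x <= M * loglogistic_pdf q x) ->
  exists L, is_RInt_gen f (at_right b) (Rbar_locally p_infty) L /\ 0 < L.
Proof.
  intros Hb HM Hc Hp Hf.
  destruct (is_RInt_gen_nonneg_bounded f b M Hc ltac:(intros x Hx; left; now apply Hp)
    (RInt_le_of_loglogistic_bound f b q M Hb HM Hc Hf)) as [L [HL HLb]].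
  exists L. split; [exact HL|].
  apply Rlt_le_trans with (RInt f (b + 1) (b + 2)); [|apply HLb; lra].
  pose proof (RInt_lt (fun _ => 0) f (b + 1) (b + 2) ltac:(lra)
     ltac:(intros; apply Hc; lra) ltac:(intros; apply continuous_const)
     ltac:(intros x Hx; apply Hp; lra)) as H0.
  rewrite RInt_const in H0. unfold scal in H0; simpl in H0; unfold mult in H0; simpl in H0. lra.
Qed.

Lemma one_plus_Rpower_le_exp t q c : 0 < t -> 0 < q -> 0 < c ->
  1 + Rpower t q <= (1 + Rpower (q / c) q) * exp (c * t).
Proof.
  intros Ht Hq Hc. pose proof (Rpower_le_exp_mul t q c Ht Hq Hc).
  pose proof (exp_ge_1 (c * t) ltac:(nra)). pose proof (Rpower_gt0 (q / c) q). nra.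
Qed.

Lemma le_loglogistic_pdf (v q K t : R) : 0 < q -> 0 < t ->
  v * (1 + Rpower t q) ^ 2 <= K * Rpower t (q - 1) -> v <= K / q * loglogistic_pdf q t.
Proof.
  intros Hq Ht H. unfold loglogistic_pdf. pose proof (Rpower_gt0 t q).
  assert (Hsq : 0 < (1 + Rpower t q) ^ 2) by nra.
  apply Rmult_le_reg_r with ((1 + Rpower t q) ^ 2); [exact Hsq|].
  replace (K / q * (q * Rpower t (q - 1) / (1 + Rpower t q) ^ 2) * (1 + Rpower t q) ^ 2)
    with (K * Rpower t (q - 1)) by (field; lra).
  exact H.
Qed.

Definition Gamma_integrand (s t : R) : R := Rpower t (s - 1) * exp (- t).

Lemma Gamma_integrand_pos s t : 0 < Gamma_integrand s t.
Proof. apply Rmult_lt_0_compat; [apply Rpower_gt0 | apply exp_pos]. Qed.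

Lemma Gamma_integrand_continuous s t : 0 < t -> continuous (Gamma_integrand s) t.
Proof.
  intros Ht. apply (ex_derive_continuous (K := R_AbsRing) (V := R_NormedModule)).
  unfold Gamma_integrand, Rpower. auto_derive. lra.
Qed.

Lemma Gamma_integrand_le_loglogistic s t : 0 < s -> 0 < t ->
  Gamma_integrand s t <= (1 + Rpower (4 * s) s) ^ 2 / s * loglogistic_pdf s t.
Proof.
  intros Hs Ht. apply le_loglogistic_pdf; [exact Hs | exact Ht|].
  unfold Gamma_integrand.
  pose proof (one_plus_Rpower_le_exp t s (1/4) Ht Hs ltac:(lra)) as H.
  replace (s / (1 / 4)) with (4 * s) in H by (field; lra).
  set (A := 1 + Rpower (4 * s) s) in *. pose proof (Rpower_gt0 t s).
  assert (Hsq : (1 + Rpower t s) ^ 2 * exp (- t) <= A ^ 2).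
  { apply Rle_trans with ((A * exp (1/4 * t)) ^ 2 * exp (- t)).
    - apply Rmult_le_compat_r; [left; apply exp_pos | apply pow_incr; lra].
    - replace ((A * exp (1/4 * t)) ^ 2 * exp (- t)) with (A ^ 2 * exp (1/4 * t + 1/4 * t + - t))
        by (rewrite !exp_plus; ring).
      pose proof (exp_le_1 (1/4 * t + 1/4 * t + - t) ltac:(lra)). nra. }
  pose proof (Rpower_gt0 t (s - 1)). nra.
Qed.

Lemma Gamma_spec s : 0 < s ->
  is_RInt_gen (Gamma_integrand s) (at_right 0) (Rbar_locally p_infty) (Gamma s) /\ 0 < Gamma s.
Proof.
  intros Hs.
  assert (HM : 0 <= (1 + Rpower (4 * s) s) ^ 2 / s)
    by (apply Rdiv_le_0_compat; [apply pow2_ge_0 | exact Hs]).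
  destruct (is_RInt_gen_pos_of_loglogistic_bound (Gamma_integrand s) 0 s _ (Rle_refl 0) HM
    ltac:(intros; now apply Gamma_integrand_continuous)
    ltac:(intros; apply Gamma_integrand_pos)
    ltac:(intros; now apply Gamma_integrand_le_loglogistic)) as [L [HL HL0]].
  replace (Gamma s) with L; [now split|].
  symmetry. exact (is_RInt_gen_unique (V := R_CompleteNormedModule) _ _ HL).
Qed.

Lemma Gamma_pos s : 0 < s -> 0 < Gamma s.
Proof. intros Hs. exact (proj2 (Gamma_spec s Hs)). Qed.

Definition Gamma_ibp_term (s t : R) : R := - (Rpower t s * exp (- t)).

Lemma Gamma_ibp_term_derive s t : 0 < t ->
  is_derive (Gamma_ibp_term s) t (Gamma_integrand (s + 1) t - s * Gamma_integrand s t).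
Proof.
  intros Ht. unfold Gamma_ibp_term, Gamma_integrand, Rpower. auto_derive; [lra|].
  replace (s + 1 - 1) with s by ring.
  replace ((s - 1) * ln t) with (s * ln t + - ln t) by ring.
  rewrite exp_plus, (exp_Ropp (ln t)), exp_ln by lra. field. lra.
Qed.

Lemma Gamma_ibp_term_lim_0 s : 0 < s ->
  filterlim (Gamma_ibp_term s) (at_right 0) (locally 0).
Proof.
  intros Hs. apply (filterlim_locally (F := at_right 0)). intros eps.
  pose proof (cond_pos eps) as Heps.
  exists (mkposreal _ (exp_pos (ln eps / s))). intros t Ht Htp.
  change R in t. change (Rabs (t - 0) < exp (ln eps / s)) in Ht.
  change (Rabs (Gamma_ibp_term s t - 0) < eps).
  rewrite Rminus_0_r, Rabs_right in Ht by lra.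
  unfold Gamma_ibp_term. rewrite Rminus_0_r, Rabs_Ropp.
  pose proof (Rpower_gt0 t s). pose proof (exp_pos (- t)).
  rewrite Rabs_right by nra.
  assert (Hts : Rpower t s < eps).
  { unfold Rpower. rewrite <- (exp_ln eps) by lra. apply exp_increasing.
    apply ln_increasing in Ht; [|exact Htp]. rewrite ln_exp in Ht.
    apply Rmult_lt_reg_r with (/ s); [now apply Rinv_0_lt_compat|].
    replace (s * ln t * / s) with (ln t) by (field; lra). exact Ht. }
  pose proof (exp_le_1 (- t) ltac:(lra)). nra.
Qed.

Lemma Gamma_ibp_term_lim_pinfty s : 0 < s ->
  filterlim (Gamma_ibp_term s) (Rbar_locally p_infty) (locally 0).
Proof.
  intros Hs. apply (filterlim_locally (F := Rbar_locally p_infty)). intros eps.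
  pose proof (cond_pos eps) as Heps.
  set (A := Rpower (s / (1/2)) s). assert (HA : 0 < A) by apply Rpower_gt0.
  exists (Rmax 1 (2 * (ln A - ln eps))). intros t Ht.
  assert (Ht1 : 1 < t) by (eapply Rle_lt_trans; [apply Rmax_l | exact Ht]).
  assert (Ht2 : 2 * (ln A - ln eps) < t) by (eapply Rle_lt_trans; [apply Rmax_r | exact Ht]).
  change (Rabs (Gamma_ibp_term s t - 0) < eps).
  unfold Gamma_ibp_term. rewrite Rminus_0_r, Rabs_Ropp.
  rewrite Rabs_right by (left; apply Rmult_lt_0_compat; [apply Rpower_gt0 | apply exp_pos]).
  pose proof (Rpower_le_exp_mul t s (1/2) ltac:(lra) Hs ltac:(lra)) as Hle. fold A in Hle.
  apply Rle_lt_trans with (A * exp (1/2 * t + - t)).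
  { rewrite exp_plus, <- Rmult_assoc. apply Rmult_le_compat_r; [left; apply exp_pos | exact Hle]. }
  assert (Heps' : A * exp (ln eps - ln A) = eps).
  { unfold Rminus. rewrite exp_plus, exp_Ropp, (exp_ln eps Heps), (exp_ln A HA). field. lra. }
  rewrite <- Heps'. apply Rmult_lt_compat_l; [exact HA|]. apply exp_increasing. lra.
Qed.

Lemma Gamma_succ s : 0 < s -> Gamma (s + 1) = s * Gamma s.
Proof.
  intros Hs. destruct (Gamma_spec s Hs) as [HG _].
  assert (Hderiv : forall t, 0 < t ->
    Derive (Gamma_ibp_term s) t = Gamma_integrand (s + 1) t - s * Gamma_integrand s t)
    by (intros; apply is_derive_unique, Gamma_ibp_term_derive; lra).
  assert (HD : is_RInt_gen (Derive (Gamma_ibp_term s)) (at_right 0)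
                 (Rbar_locally p_infty) (0 - 0)).
  { apply is_RInt_gen_Derive.
    - apply filter_prod_at_right_pinfty. intros x y Hx Hy z Hz. simpl in Hz.
      rewrite Rmin_left in Hz by lra. eexists. apply Gamma_ibp_term_derive. lra.
    - apply filter_prod_at_right_pinfty. intros x y Hx Hy z Hz. simpl in Hz.
      rewrite Rmin_left in Hz by lra.
      apply continuous_ext_loc with (fun t => Gamma_integrand (s + 1) t - s * Gamma_integrand s t).
      + apply locally_interval with 0 p_infty; [simpl; lra | exact I|].
        intros u Hu _. symmetry. now apply Hderiv.
      + apply (ex_derive_continuous (K := R_AbsRing) (V := R_NormedModule)).
        unfold Gamma_integrand, Rpower. auto_derive. lra.
    - now apply Gamma_ibp_term_lim_0.
    - now apply Gamma_ibp_term_lim_pinfty. }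
  pose proof (is_RInt_gen_plus _ _ _ _ HD (is_RInt_gen_scal _ s _ HG)) as HS.
  assert (HS' : is_RInt_gen (Gamma_integrand (s + 1)) (at_right 0) (Rbar_locally p_infty)
                  (s * Gamma s)).
  { replace (s * Gamma s) with (plus (0 - 0) (scal s (Gamma s)))
      by (unfold plus, scal; simpl; unfold mult; simpl; ring).
    eapply is_RInt_gen_ext; [|exact HS].
    apply filter_prod_at_right_pinfty. intros x y Hx Hy z Hz. simpl in Hz.
    rewrite Rmin_left in Hz by lra. rewrite Hderiv by lra.
    unfold plus, scal; simpl; unfold mult; simpl. ring. }
  exact (is_RInt_gen_unique (V := R_CompleteNormedModule) _ _ HS').
Qed.

Definition bessel_coef (nu : R) (k : nat) : R :=
  / (INR (Factorial.fact k) * Gamma (INR k + nu + 1)).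

Lemma INR_fact_pos k : 0 < INR (Factorial.fact k).
Proof. apply lt_0_INR, Factorial.lt_O_fact. Qed.

Lemma bessel_coef_pos nu k : -1 < nu -> 0 < bessel_coef nu k.
Proof.
  intros Hnu. apply Rinv_0_lt_compat, Rmult_lt_0_compat; [apply INR_fact_pos|].
  apply Gamma_pos. pose proof (pos_INR k). lra.
Qed.

Lemma bessel_coef_succ nu k : -1 < nu ->
  bessel_coef nu (S k) = bessel_coef nu k / ((INR k + 1) * (INR k + nu + 1)).
Proof.
  intros Hnu. unfold bessel_coef. rewrite fact_simpl, mult_INR, S_INR.
  replace (INR k + 1 + nu + 1) with ((INR k + nu + 1) + 1) by ring.
  pose proof (pos_INR k). pose proof (INR_fact_pos k). pose proof (Gamma_pos (INR k + nu + 1)).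
  rewrite Gamma_succ by lra. field. repeat split; lra.
Qed.

Lemma is_lim_seq_inv_succ : is_lim_seq (fun n => / (INR n + 1)) 0.
Proof.
  assert (H : is_lim_seq (fun n => INR (S n)) p_infty)
    by apply (is_lim_seq_incr_1 INR p_infty), is_lim_seq_INR.
  apply is_lim_seq_inv in H; [|discriminate].
  eapply is_lim_seq_ext; [|exact H]. intros n.
  change (/ INR (S n) = / (INR n + 1)). now rewrite S_INR.
Qed.

Lemma bessel_coef_radius nu : -1 < nu -> CV_radius (bessel_coef nu) = p_infty.
Proof.
  intros Hnu. apply CV_radius_infinite_DAlembert.
  - intros n. pose proof (bessel_coef_pos nu n Hnu). lra.
  - apply is_lim_seq_le_le with (fun _ => 0) (fun n => / (nu + 1) * / (INR n + 1)).
    + intros n. rewrite bessel_coef_succ by lra.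
      pose proof (bessel_coef_pos nu n Hnu). pose proof (pos_INR n).
      replace (bessel_coef nu n / ((INR n + 1) * (INR n + nu + 1)) / bessel_coef nu n)
        with (/ ((INR n + 1) * (INR n + nu + 1))) by (field; repeat split; lra).
      rewrite Rabs_right by (apply Rle_ge, Rlt_le, Rinv_0_lt_compat; nra).
      split; [left; apply Rinv_0_lt_compat; nra|].
      rewrite <- Rinv_mult. apply Rinv_le_contravar; nra.
    + apply is_lim_seq_const.
    + replace (Finite 0) with (Rbar_mult (/ (nu + 1)) 0) by (simpl; f_equal; ring).
      apply is_lim_seq_scal_l, is_lim_seq_inv_succ.
Qed.

Lemma ex_series_bessel_coef nu w : -1 < nu -> ex_series (fun k => bessel_coef nu k * w ^ k).
Proof.
  intros Hnu. apply ex_pseries_R, CV_radius_inside. rewrite bessel_coef_radius by exact Hnu.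
  exact I.
Qed.

Lemma BesselI_PSeries nu z : -1 < nu -> 0 < z ->
  BesselI nu z = Rpower (z / 2) nu * PSeries (bessel_coef nu) ((z / 2) ^ 2).
Proof.
  intros Hnu Hz. unfold BesselI, PSeries. rewrite <- Series_scal_l. apply Series_ext. intros k.
  rewrite Rpower_plus.
  replace (2 * INR k) with (INR (2 * k)) by (rewrite mult_INR; reflexivity).
  rewrite Rpower_pow, pow_mult by lra. unfold bessel_coef.
  pose proof (INR_fact_pos k). pose proof (pos_INR k). pose proof (Gamma_pos (INR k + nu + 1)).
  field. lra.
Qed.

Lemma BesselI_continuous nu z : -1 < nu -> 0 < z -> continuous (BesselI nu) z.
Proof.
  intros Hnu Hz.
  apply continuous_ext_loc with
    (fun z => Rpower (z / 2) nu * PSeries (bessel_coef nu) ((z / 2) ^ 2)).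
  - apply locally_interval with 0 p_infty; [simpl; lra | exact I|].
    intros u Hu _. symmetry. apply BesselI_PSeries; [exact Hnu | exact Hu].
  - apply (continuous_mult (K := R_AbsRing)).
    + apply (ex_derive_continuous (K := R_AbsRing) (V := R_NormedModule)).
      unfold Rpower. auto_derive. lra.
    + apply (continuous_comp (fun z => (z / 2) ^ 2) (PSeries (bessel_coef nu))).
      * apply (ex_derive_continuous (K := R_AbsRing) (V := R_NormedModule)). auto_derive. auto.
      * apply continuity_pt_filterlim, PSeries_continuity.
        rewrite bessel_coef_radius by exact Hnu. exact I.
Qed.

Lemma BesselI_pos nu z : -1 < nu -> 0 < z -> 0 < BesselI nu z.
Proof.
  intros Hnu Hz. rewrite BesselI_PSeries by assumption.
  apply Rmult_lt_0_compat; [apply Rpower_gt0|]. unfold PSeries.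
  set (w := (z / 2) ^ 2). assert (Hw : 0 < w) by (unfold w; nra).
  rewrite Series_incr_1 by apply (ex_series_bessel_coef nu _ Hnu).
  assert (0 <= Series (fun k => bessel_coef nu (S k) * w ^ S k)).
  { apply Series_nonneg.
    - apply (ex_series_incr_1 (fun k => bessel_coef nu k * w ^ k)), ex_series_bessel_coef, Hnu.
    - intros k. pose proof (bessel_coef_pos nu (S k) Hnu). pose proof (pow_lt w (S k) Hw). nra. }
  rewrite pow_O, Rmult_1_r. pose proof (bessel_coef_pos nu 0 Hnu). lra.
Qed.

(* By induction, as [k + nu + 1 >= m (k + 1)] and [m <= 1] for [m = min 1 (1 + nu)]. *)
Lemma bessel_coef_le nu k : -1 < nu ->
  bessel_coef nu k * (Rmin 1 (1 + nu) ^ (2 * k) * INR (Factorial.fact k) ^ 2) <= bessel_coef nu 0.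
Proof.
  intros Hnu. set (m := Rmin 1 (1 + nu)).
  assert (Hm : 0 < m) by (apply Rmin_glb_lt; lra).
  assert (Hm1 : m <= 1) by apply Rmin_l.
  induction k as [|k IH]; [simpl; lra|].
  rewrite bessel_coef_succ, fact_simpl, mult_INR, S_INR by lra.
  replace (m ^ (2 * S k)) with (m * m * m ^ (2 * k))
    by (replace (2 * S k)%nat with (S (S (2 * k))) by lia; simpl; ring).
  pose proof (bessel_coef_pos nu k Hnu). pose proof (pos_INR k). pose proof (INR_fact_pos k).
  set (F := INR (Factorial.fact k)) in *. set (c := bessel_coef nu k) in *.
  assert (Hk : m * (INR k + 1) <= INR k + nu + 1).
  { destruct (Rle_or_lt 0 nu); [nra|]. unfold m. rewrite Rmin_right by lra. nra. }
  assert (Hratio : m * m * (INR k + 1) / (INR k + nu + 1) <= 1).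
  { rewrite <- Rdiv_le_1 by lra. nra. }
  assert (E : c / ((INR k + 1) * (INR k + nu + 1)) * (m * m * m ^ (2 * k) * ((INR k + 1) * F) ^ 2)
            = c * (m ^ (2 * k) * F ^ 2) * (m * m * (INR k + 1) / (INR k + nu + 1)))
    by (field; lra).
  rewrite E.
  assert (0 <= c * (m ^ (2 * k) * F ^ 2))
    by (apply Rmult_le_pos; [lra | apply Rmult_le_pos; [apply pow_le; lra | nra]]).
  assert (0 <= m * m * (INR k + 1) / (INR k + nu + 1)) by (apply Rdiv_le_0_compat; nra).
  nra.
Qed.

Lemma bessel_coef_term_le nu k u : -1 < nu ->
  bessel_coef nu k * (u ^ 2) ^ k <=
    bessel_coef nu 0 * ((u / Rmin 1 (1 + nu)) ^ k / INR (Factorial.fact k)) ^ 2.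
Proof.
  intros Hnu. pose proof (bessel_coef_le nu k Hnu) as H.
  set (m := Rmin 1 (1 + nu)) in *.
  assert (Hm : 0 < m) by (apply Rmin_glb_lt; lra).
  pose proof (INR_fact_pos k). assert (Hmk : 0 < m ^ k) by (apply pow_lt; lra).
  set (D := m ^ (2 * k) * INR (Factorial.fact k) ^ 2) in H.
  assert (HD : D = (m ^ k * INR (Factorial.fact k)) ^ 2)
    by (unfold D; rewrite Nat.mul_comm, pow_mult; ring).
  assert (HD0 : 0 < D) by (rewrite HD; apply pow_lt; nra).
  replace ((u / m) ^ k / INR (Factorial.fact k)) with (u ^ k / (m ^ k * INR (Factorial.fact k)))
    by (unfold Rdiv; rewrite Rpow_mult_distr, pow_inv; field; lra).
  replace ((u ^ 2) ^ k) with ((u ^ k) ^ 2) by (rewrite <- !pow_mult; f_equal; lia).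
  replace ((u ^ k / (m ^ k * INR (Factorial.fact k))) ^ 2) with ((u ^ k) ^ 2 / D)
    by (rewrite HD; field; lra).
  apply Rmult_le_reg_r with D; [exact HD0|].
  replace (bessel_coef nu 0 * ((u ^ k) ^ 2 / D) * D) with (bessel_coef nu 0 * (u ^ k) ^ 2)
    by (field; lra).
  pose proof (pow2_ge_0 (u ^ k)). nra.
Qed.

Lemma sum_f_R0_sq_le (t : nat -> R) N : (forall k, 0 <= t k) ->
  sum_f_R0 (fun k => t k ^ 2) N <= sum_f_R0 t N ^ 2.
Proof.
  intros Ht. induction N as [|N IH]; [simpl; lra|].
  change (sum_f_R0 (fun k => t k ^ 2) N + t (S N) ^ 2 <= (sum_f_R0 t N + t (S N)) ^ 2).
  pose proof (cond_pos_sum t N Ht). pose proof (Ht (S N)). nra.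
Qed.

Lemma Series_le_of_partial_sums (a : nat -> R) B : ex_series a ->
  (forall N, sum_f_R0 a N <= B) -> Series a <= B.
Proof.
  intros Hex HB. pose proof (Series_correct a Hex) as H.
  change (is_lim_seq (sum_n a) (Series a)) in H.
  exact (is_lim_seq_le (sum_n a) (fun _ => B) (Series a) B
    ltac:(intros n; rewrite sum_n_Reals; apply HB) H (is_lim_seq_const B)).
Qed.

(* Squaring the exponential series: [sum_k (Y^k / k!)^2 <= (e^Y)^2]. *)
Lemma BesselI_le_exp nu z : -1 < nu -> 0 < z ->
  BesselI nu z <= Rpower (z / 2) nu * (bessel_coef nu 0 * exp (z / Rmin 1 (1 + nu))).
Proof.
  intros Hnu Hz. rewrite BesselI_PSeries by assumption.
  apply Rmult_le_compat_l; [left; apply Rpower_gt0|].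
  set (m := Rmin 1 (1 + nu)). assert (Hm : 0 < m) by (apply Rmin_glb_lt; lra).
  set (Y := z / 2 / m). assert (HY : 0 <= Y) by (unfold Y; apply Rdiv_le_0_compat; lra).
  set (e := fun k => Y ^ k / INR (Factorial.fact k)).
  assert (He : forall k, 0 <= e k)
    by (intros k; apply Rdiv_le_0_compat; [apply pow_le; lra | apply INR_fact_pos]).
  replace (exp (z / m)) with (exp Y ^ 2)
    by (rewrite <- Rsqr_pow2; unfold Rsqr; rewrite <- exp_plus; f_equal; unfold Y; field; lra).
  apply Series_le_of_partial_sums; [apply ex_series_bessel_coef, Hnu|]. intros N.
  apply Rle_trans with (bessel_coef nu 0 * sum_f_R0 (fun k => e k ^ 2) N).
  - rewrite scal_sum. apply sum_Rle. intros k _. rewrite (Rmult_comm (e k ^ 2)).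
    exact (bessel_coef_term_le nu k (z / 2) Hnu).
  - apply Rmult_le_compat_l; [left; apply bessel_coef_pos, Hnu|].
    apply Rle_trans with (sum_f_R0 e N ^ 2); [now apply sum_f_R0_sq_le|].
    pose proof (cond_pos_sum e N He). pose proof (exp_ge_taylor Y N HY). fold e in H0.
    apply pow_incr. lra.
Qed.

Definition nuttall_integrand (mu nu a x : R) : R :=
  Rpower x mu * exp (- (x ^ 2 + a ^ 2) / 2) * BesselI nu (a * x).

Lemma nuttall_integrand_continuous mu nu a x : -1 < nu -> 0 < a -> 0 < x ->
  continuous (nuttall_integrand mu nu a) x.
Proof.
  intros Hnu Ha Hx. unfold nuttall_integrand.
  apply (continuous_mult (K := R_AbsRing)
           (fun x => Rpower x mu * exp (- (x ^ 2 + a ^ 2) / 2)) (fun x => BesselI nu (a * x))).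
  - apply (ex_derive_continuous (K := R_AbsRing) (V := R_NormedModule)).
    unfold Rpower. auto_derive. lra.
  - apply (continuous_comp (fun x => a * x) (BesselI nu)).
    + apply (ex_derive_continuous (K := R_AbsRing) (V := R_NormedModule)). auto_derive. auto.
    + apply BesselI_continuous; nra.
Qed.

Lemma nuttall_integrand_pos mu nu a x : -1 < nu -> 0 < a -> 0 < x ->
  0 < nuttall_integrand mu nu a x.
Proof.
  intros. unfold nuttall_integrand.
  apply Rmult_lt_0_compat; [apply Rmult_lt_0_compat; [apply Rpower_gt0 | apply exp_pos]|].
  apply BesselI_pos; nra.
Qed.

Lemma nuttall_integrand_le_gauss mu nu a x : -1 < nu -> 0 < a -> 0 < x ->
  nuttall_integrand mu nu a x <=
    exp (- a ^ 2 / 2) * Rpower (a / 2) nu * bessel_coef nu 0 * Rpower x (mu + nu) *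
    exp (- x ^ 2 / 2 + a / Rmin 1 (1 + nu) * x).
Proof.
  intros Hnu Ha Hx. unfold nuttall_integrand.
  pose proof (BesselI_le_exp nu (a * x) Hnu ltac:(nra)) as HB.
  replace (a * x / 2) with (a / 2 * x) in HB by field.
  rewrite <- Rpower_mult_distr in HB by lra.
  apply Rle_trans with (Rpower x mu * exp (- (x ^ 2 + a ^ 2) / 2) *
    (Rpower (a / 2) nu * Rpower x nu * (bessel_coef nu 0 * exp (a * x / Rmin 1 (1 + nu))))).
  { apply Rmult_le_compat_l; [|exact HB].
    left; apply Rmult_lt_0_compat; [apply Rpower_gt0 | apply exp_pos]. }
  right. rewrite Rpower_plus.
  replace (- (x ^ 2 + a ^ 2) / 2) with (- a ^ 2 / 2 + - x ^ 2 / 2) by field.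
  replace (a * x / Rmin 1 (1 + nu)) with (a / Rmin 1 (1 + nu) * x)
    by (field; apply Rgt_not_eq, Rmin_glb_lt; lra).
  rewrite !exp_plus. ring.
Qed.

(* [-x^2/2 + (c + 2) x <= (c + 2)^2 / 2]: the Gaussian beats any exponential. *)
Lemma gauss_absorbs_poly x q c : 0 < x -> 0 < q -> 0 <= c ->
  (1 + Rpower x q) ^ 2 * exp (- x ^ 2 / 2 + c * x) <= (1 + Rpower q q) ^ 2 * exp ((c + 2) ^ 2 / 2).
Proof.
  intros Hx Hq Hc.
  pose proof (one_plus_Rpower_le_exp x q 1 Hx Hq Rlt_0_1) as H.
  replace (q / 1) with q in H by field.
  pose proof (Rpower_gt0 x q). pose proof (Rpower_gt0 q q).
  apply Rle_trans with (((1 + Rpower q q) * exp (1 * x)) ^ 2 * exp (- x ^ 2 / 2 + c * x)).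
  { apply Rmult_le_compat_r; [left; apply exp_pos | apply pow_incr; lra]. }
  replace (((1 + Rpower q q) * exp (1 * x)) ^ 2 * exp (- x ^ 2 / 2 + c * x))
    with ((1 + Rpower q q) ^ 2 * exp (1 * x + 1 * x + (- x ^ 2 / 2 + c * x)))
    by (rewrite !exp_plus; ring).
  apply Rmult_le_compat_l; [apply pow2_ge_0|]. apply exp_le_exp.
  pose proof (pow2_ge_0 (x - (c + 2))). nra.
Qed.

Lemma nuttall_integrand_le_loglogistic mu nu a : 0 < mu -> -1 < nu -> 0 < a ->
  exists M, 0 <= M /\
    forall x, 0 < x -> nuttall_integrand mu nu a x <= M * loglogistic_pdf (mu + nu + 1) x.
Proof.
  intros Hmu Hnu Ha. set (q := mu + nu + 1). set (m := Rmin 1 (1 + nu)).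
  assert (Hm : 0 < m) by (apply Rmin_glb_lt; lra).
  set (C := exp (- a ^ 2 / 2) * Rpower (a / 2) nu * bessel_coef nu 0).
  assert (HC : 0 < C).
  { unfold C. repeat apply Rmult_lt_0_compat; [apply exp_pos | apply Rpower_gt0 |].
    now apply bessel_coef_pos. }
  set (K := C * ((1 + Rpower q q) ^ 2 * exp ((a / m + 2) ^ 2 / 2))).
  assert (HK : 0 < K).
  { unfold K. pose proof (Rpower_gt0 q q).
    apply Rmult_lt_0_compat; [exact HC | apply Rmult_lt_0_compat; [apply pow_lt; lra | apply exp_pos]]. }
  exists (K / q). split; [apply Rdiv_le_0_compat; unfold q; lra|].
  intros x Hx. apply le_loglogistic_pdf; [unfold q; lra | exact Hx|].
  pose proof (nuttall_integrand_le_gauss mu nu a x Hnu Ha Hx) as H. fold m C in H.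
  replace (mu + nu) with (q - 1) in H by (unfold q; ring).
  pose proof (gauss_absorbs_poly x q (a / m) Hx ltac:(unfold q; lra)
    ltac:(apply Rdiv_le_0_compat; lra)).
  pose proof (Rpower_gt0 x q). pose proof (Rpower_gt0 x (q - 1)).
  apply Rle_trans with (C * Rpower x (q - 1) * exp (- x ^ 2 / 2 + a / m * x) * (1 + Rpower x q) ^ 2).
  { apply Rmult_le_compat_r; [apply pow2_ge_0 | exact H]. }
  unfold K. assert (0 < C * Rpower x (q - 1)) by nra. nra.
Qed.

Lemma NuttallQ_spec mu nu a b : 0 <= b -> 0 < mu -> -1 < nu -> 0 < a ->
  is_RInt_gen (nuttall_integrand mu nu a) (at_right b) (Rbar_locally p_infty)
    (NuttallQ mu nu a b) /\ 0 < NuttallQ mu nu a b.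
Proof.
  intros Hb Hmu Hnu Ha.
  destruct (nuttall_integrand_le_loglogistic mu nu a Hmu Hnu Ha) as (M & HM & Hle).
  destruct (is_RInt_gen_pos_of_loglogistic_bound (nuttall_integrand mu nu a) b
    (mu + nu + 1) M Hb HM
    ltac:(intros; apply nuttall_integrand_continuous; lra)
    ltac:(intros; apply nuttall_integrand_pos; lra)
    ltac:(intros; apply Hle; lra)) as [L [HL HL0]].
  replace (NuttallQ mu nu a b) with L; [now split|].
  symmetry. exact (is_RInt_gen_unique (V := R_CompleteNormedModule) _ _ HL).
Qed.

Lemma Rpower_convex_exponent x : convex_on (fun _ => True) (Rpower x).
Proof.
  intros m m' t _ _ Ht. unfold Rpower.
  replace ((t * m + (1 - t) * m') * ln x) with (t * (m * ln x) + (1 - t) * (m' * ln x)) by ring.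
  now apply exp_convex.
Qed.

Lemma NuttallQ_convex nu a b : 0 <= b -> -1 < nu -> 0 < a ->
  convex_on (fun mu => 0 < mu) (fun mu => NuttallQ mu nu a b).
Proof.
  intros Hb Hnu Ha m m' t Hm Hm' Ht.
  assert (Hmt : 0 < t * m + (1 - t) * m') by nra.
  pose proof (is_RInt_gen_lin3 _ _ _ b _ _ _ t (1 - t)
    (proj1 (NuttallQ_spec _ nu a b Hb Hm Hnu Ha))
    (proj1 (NuttallQ_spec _ nu a b Hb Hmt Hnu Ha))
    (proj1 (NuttallQ_spec _ nu a b Hb Hm' Hnu Ha))) as HI.
  apply is_RInt_gen_opp, is_RInt_gen_nonpos in HI; [unfold opp in HI; simpl in HI; lra|].
  intros x Hx. unfold opp; simpl. unfold nuttall_integrand.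
  set (K := exp (- (x ^ 2 + a ^ 2) / 2) * BesselI nu (a * x)).
  assert (HK : 0 < K) by (apply Rmult_lt_0_compat; [apply exp_pos | apply BesselI_pos; nra]).
  pose proof (Rpower_convex_exponent x m m' t I I Ht).
  replace (t * (Rpower x m * exp (- (x ^ 2 + a ^ 2) / 2) * BesselI nu (a * x)) -
     Rpower x (t * m + (1 - t) * m') * exp (- (x ^ 2 + a ^ 2) / 2) * BesselI nu (a * x) +
     (1 - t) * (Rpower x m' * exp (- (x ^ 2 + a ^ 2) / 2) * BesselI nu (a * x)))
    with ((t * Rpower x m + (1 - t) * Rpower x m' - Rpower x (t * m + (1 - t) * m')) * K)
    by (unfold K; ring).
  nra.
Qed.

Lemma NuttallQ_continuous nu a b mu : 0 <= b -> -1 < nu -> 0 < a -> 0 < mu ->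
  continuous (fun mu => NuttallQ mu nu a b) mu.
Proof.
  intros Hb Hnu Ha Hmu.
  apply (convex_continuous (fun mu => 0 < mu) _ mu (mu / 2)); [now apply NuttallQ_convex | lra|].
  intros y Hy. apply Rabs_le_between in Hy. lra.
Qed.

Lemma NuttallQ_ratio_continuous b nu1 nu2 a1 a2 mu : 0 <= b -> -1 < nu1 -> -1 < nu2 ->
  0 < a1 -> 0 < a2 -> 0 < mu ->
  continuous (fun mu => NuttallQ mu nu1 a1 b / NuttallQ mu nu2 a2 b) mu.
Proof.
  intros Hb Hnu1 Hnu2 Ha1 Ha2 Hmu.
  pose proof (proj2 (NuttallQ_spec mu nu2 a2 b Hb Hmu Hnu2 Ha2)).
  apply (continuous_mult (K := R_AbsRing) (fun mu => NuttallQ mu nu1 a1 b)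
           (fun mu => / NuttallQ mu nu2 a2 b)); [now apply NuttallQ_continuous|].
  apply (continuous_comp (fun mu => NuttallQ mu nu2 a2 b) Rinv); [now apply NuttallQ_continuous|].
  apply continuity_pt_filterlim, continuity_pt_inv; [apply continuity_pt_id | lra].
Qed.

Section DecreasingRatios.

Variables (rho r : nat -> R) (l : nat).
Hypothesis rho_before : forall k, (k < l)%nat -> rho k = 0.
Hypothesis rho_pos : forall k, (l <= k)%nat -> 0 < rho k.
Hypothesis rho_succ : forall k, (l <= k)%nat -> rho (S k) = rho k * r k.
Hypothesis r_decr : forall k, (l <= k)%nat -> r (S k) <= r k.

Lemma ratio_antitone m n : (l <= m <= n)%nat -> r n <= r m.
Proof.
  intros [Hlm Hmn]. induction Hmn as [|n Hmn IH]; [lra|].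
  pose proof (r_decr n ltac:(lia)). lra.
Qed.

Lemma rho_nondecreasing_run i n : (l <= i)%nat ->
  (forall m, (i <= m < i + n)%nat -> 1 <= r m) -> rho i <= rho (i + n).
Proof.
  intros Hi Hr. induction n as [|n IH]; [rewrite Nat.add_0_r; lra|].
  rewrite Nat.add_succ_r, rho_succ by lia.
  pose proof (Hr (i + n)%nat ltac:(lia)). pose proof (rho_pos (i + n) ltac:(lia)).
  assert (rho i <= rho (i + n)) by (apply IH; intros; apply Hr; lia). nra.
Qed.

Lemma rho_nonincreasing_run j n : (l <= j)%nat ->
  (forall m, (j <= m)%nat -> r m <= 1) -> rho (j + n) <= rho j.
Proof.
  intros Hj Hr. induction n as [|n IH]; [rewrite Nat.add_0_r; lra|].
  rewrite Nat.add_succ_r, rho_succ by lia.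
  pose proof (Hr (j + n)%nat ltac:(lia)). pose proof (rho_pos (j + n) ltac:(lia)). nra.
Qed.

(* The ratio [r] crosses [1] at most once, downwards: [rho] rises, then falls. *)
Lemma rho_superlevel_convex c i j k : (i <= j <= k)%nat ->
  c < rho i -> c < rho k -> c < rho j.
Proof.
  intros [Hij Hjk] Hi Hk.
  destruct (Nat.lt_ge_cases j l) as [Hjl|Hlj].
  { rewrite rho_before in Hi |- * by lia. exact Hi. }
  destruct (Nat.lt_ge_cases i l) as [Hil|Hli].
  { rewrite rho_before in Hi by lia. pose proof (rho_pos j Hlj). lra. }
  destruct (Nat.eq_dec i j) as [<-|Hne]; [exact Hi|].
  destruct (Rle_or_lt 1 (r (j - 1))) as [Hr|Hr].
  - assert (rho i <= rho (i + (j - i))).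
    { apply rho_nondecreasing_run; [exact Hli|]. intros m Hm.
      pose proof (ratio_antitone m (j - 1) ltac:(lia)). lra. }
    replace (i + (j - i))%nat with j in H by lia. lra.
  - assert (rho (j + (k - j)) <= rho j).
    { apply rho_nonincreasing_run; [exact Hlj|]. intros m Hm.
      pose proof (ratio_antitone (j - 1) m ltac:(lia)). lra. }
    replace (j + (k - j))%nat with k in H by lia. lra.
Qed.

End DecreasingRatios.

Definition shift_seq (l : nat) (u : nat -> R) (k : nat) : R :=
  if (k <? l)%nat then 0 else u (k - l)%nat.

Lemma shift_seq_lt l u k : (k < l)%nat -> shift_seq l u k = 0.
Proof. intros H. unfold shift_seq. now rewrite (proj2 (Nat.ltb_lt k l) H). Qed.

Lemma shift_seq_ge l u k : (l <= k)%nat -> shift_seq l u k = u (k - l)%nat.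
Proof. intros H. unfold shift_seq. destruct (Nat.ltb_spec k l); [lia | reflexivity]. Qed.

Lemma ex_series_shift_seq l u y : ex_series (fun k => u k * y ^ k) ->
  ex_series (fun k => shift_seq l u k * y ^ k).
Proof.
  intros H. apply (ex_series_incr_n (K := R_AbsRing) (V := R_NormedModule) _ l).
  apply (ex_series_scal_l (K := R_AbsRing) (V := R_NormedModule) (y ^ l)) in H.
  eapply ex_series_ext; [|exact H]. intros k. simpl. unfold scal; simpl; unfold mult; simpl.
  rewrite shift_seq_ge by lia. replace (l + k - l)%nat with k by lia. rewrite pow_add. ring.
Qed.

Lemma Series_shift_seq l u y : ex_series (fun k => u k * y ^ k) ->
  Series (fun k => shift_seq l u k * y ^ k) = y ^ l * Series (fun k => u k * y ^ k).
Proof.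
  intros H. destruct l as [|l].
  { rewrite pow_O, Rmult_1_l. apply Series_ext. intros k.
    rewrite shift_seq_ge, Nat.sub_0_r by lia. reflexivity. }
  rewrite (Series_incr_n _ (S l) ltac:(lia) (ex_series_shift_seq _ u y H)).
  rewrite sum_eq_R0 by (intros n Hn; rewrite shift_seq_lt by lia; ring).
  rewrite Rplus_0_l, <- Series_scal_l. apply Series_ext. intros k.
  rewrite shift_seq_ge by lia. replace (S l + k - S l)%nat with k by lia.
  rewrite pow_add. ring.
Qed.

Lemma Rpower_add_double_nat y nu k : 0 < y ->
  Rpower y (2 * INR k + nu) = Rpower y nu * (y ^ 2) ^ k.
Proof.
  intros Hy. rewrite Rplus_comm, Rpower_plus.
  replace (2 * INR k) with (INR (2 * k)) by (rewrite mult_INR; reflexivity).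
  now rewrite Rpower_pow, pow_mult.
Qed.

Definition bessel_term (a nu : R) (k : nat) : R :=
  Rpower (a / 2) nu * bessel_coef nu k * ((a / 2) ^ 2) ^ k.

Lemma bessel_term_pos a nu k : 0 < a -> -1 < nu -> 0 < bessel_term a nu k.
Proof.
  intros Ha Hnu. unfold bessel_term.
  apply Rmult_lt_0_compat; [apply Rmult_lt_0_compat; [apply Rpower_gt0 | now apply bessel_coef_pos]|].
  apply pow_lt. nra.
Qed.

Lemma bessel_term_succ a nu k : -1 < nu ->
  bessel_term a nu (S k) = bessel_term a nu k * (a / 2) ^ 2 / ((INR k + 1) * (INR k + nu + 1)).
Proof.
  intros Hnu. unfold bessel_term. rewrite bessel_coef_succ by exact Hnu.
  pose proof (pos_INR k). rewrite <- tech_pow_Rmult. field. split; lra.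
Qed.

Lemma ex_series_bessel_term a nu y : -1 < nu -> ex_series (fun k => bessel_term a nu k * y ^ k).
Proof.
  intros Hnu.
  pose proof (ex_series_scal_l (K := R_AbsRing) (V := R_NormedModule) (Rpower (a / 2) nu) _
    (ex_series_bessel_coef nu ((a / 2) ^ 2 * y) Hnu)) as H.
  eapply ex_series_ext; [|exact H]. intros k. unfold bessel_term. rewrite Rpow_mult_distr.
  unfold scal; simpl; unfold mult; simpl. ring.
Qed.

Lemma BesselI_scaled_series a nu x : 0 < a -> -1 < nu -> 0 < x ->
  BesselI nu (a * x) = Rpower x nu * Series (fun k => bessel_term a nu k * (x ^ 2) ^ k).
Proof.
  intros Ha Hnu Hx. unfold BesselI. rewrite <- Series_scal_l. apply Series_ext. intros k.
  replace (a * x / 2) with (a / 2 * x) by field.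
  rewrite <- Rpower_mult_distr, !Rpower_add_double_nat by lra.
  unfold bessel_term, bessel_coef.
  pose proof (INR_fact_pos k). pose proof (pos_INR k). pose proof (Gamma_pos (INR k + nu + 1)).
  field. split; lra.
Qed.

Section NuttallDifference.

Variables (nu1 nu2 a1 a2 : R) (l : nat).
Hypotheses (nu1_gt : -1 < nu1) (nu2_gt : -1 < nu2) (l_pos : (0 < l)%nat)
  (nu_gap : nu1 - nu2 = 2 * INR l) (a1_pos : 0 < a1) (a2_pos : 0 < a2).

(* Both Bessel series written in powers of [x^2] after factoring out [x^nu2]. *)
Let P := shift_seq l (bessel_term a1 nu1).
Let Q := bessel_term a2 nu2.

Definition nuttall_diff_coef (c : R) (k : nat) : R :=
  exp (- a1 ^ 2 / 2) * P k - c * (exp (- a2 ^ 2 / 2) * Q k).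

Definition nuttall_diff (c x : R) : R :=
  exp (- (x ^ 2 + a1 ^ 2) / 2) * BesselI nu1 (a1 * x)
  - c * (exp (- (x ^ 2 + a2 ^ 2) / 2) * BesselI nu2 (a2 * x)).

Let ex_series_P y : ex_series (fun k => P k * y ^ k).
Proof. apply ex_series_shift_seq, ex_series_bessel_term, nu1_gt. Qed.

Let ex_series_Q y : ex_series (fun k => Q k * y ^ k).
Proof. apply ex_series_bessel_term, nu2_gt. Qed.

Lemma Series_nuttall_diff_coef c y :
  Series (fun k => nuttall_diff_coef c k * y ^ k) =
    exp (- a1 ^ 2 / 2) * Series (fun k => P k * y ^ k)
    - c * exp (- a2 ^ 2 / 2) * Series (fun k => Q k * y ^ k).
Proof.
  rewrite <- !Series_scal_l, <- Series_minus.
  - apply Series_ext. intros k. unfold nuttall_diff_coef. ring.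
  - apply (ex_series_scal_l (K := R_AbsRing) (V := R_NormedModule)), ex_series_P.
  - apply (ex_series_scal_l (K := R_AbsRing) (V := R_NormedModule)), ex_series_Q.
Qed.

Lemma ex_series_nuttall_diff_coef c y : ex_series (fun k => nuttall_diff_coef c k * y ^ k).
Proof.
  apply (ex_series_ext (fun k => exp (- a1 ^ 2 / 2) * (P k * y ^ k)
                                 - c * exp (- a2 ^ 2 / 2) * (Q k * y ^ k))).
  { intros k. change (exp (- a1 ^ 2 / 2) * (P k * y ^ k) - c * exp (- a2 ^ 2 / 2) * (Q k * y ^ k)
                      = nuttall_diff_coef c k * y ^ k).
    unfold nuttall_diff_coef. ring. }
  apply (ex_series_minus (K := R_AbsRing) (V := R_NormedModule)).
  - apply (ex_series_scal_l (K := R_AbsRing) (V := R_NormedModule)), ex_series_P.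
  - apply (ex_series_scal_l (K := R_AbsRing) (V := R_NormedModule)), ex_series_Q.
Qed.

Lemma nuttall_diff_series c x : 0 < x ->
  nuttall_diff c x =
    exp (- x ^ 2 / 2) * Rpower x nu2 * Series (fun k => nuttall_diff_coef c k * (x ^ 2) ^ k).
Proof.
  intros Hx.
  assert (H1 : BesselI nu1 (a1 * x) = Rpower x nu2 * Series (fun k => P k * (x ^ 2) ^ k)).
  { rewrite BesselI_scaled_series by assumption. unfold P.
    rewrite Series_shift_seq by apply ex_series_bessel_term, nu1_gt.
    replace nu1 with (2 * INR l + nu2) by lra. rewrite Rpower_add_double_nat by exact Hx. ring. }
  rewrite Series_nuttall_diff_coef. unfold nuttall_diff.
  rewrite H1, (BesselI_scaled_series a2 nu2 x a2_pos nu2_gt Hx). fold Q.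
  replace (- (x ^ 2 + a1 ^ 2) / 2) with (- x ^ 2 / 2 + - a1 ^ 2 / 2) by field.
  replace (- (x ^ 2 + a2 ^ 2) / 2) with (- x ^ 2 / 2 + - a2 ^ 2 / 2) by field.
  rewrite !exp_plus. ring.
Qed.

Let rho k := P k / Q k.
Let ratio k := (a1 / a2) ^ 2 *
  (1 + INR l * (INR l + nu2) / ((INR k - INR l + 1) * (INR k + INR l + nu2 + 1))).

Let Q_pos k : 0 < Q k.
Proof. apply bessel_term_pos; assumption. Qed.

Let rho_before k : (k < l)%nat -> rho k = 0.
Proof. intros H. unfold rho, P. rewrite shift_seq_lt by exact H. unfold Rdiv. ring. Qed.

Let rho_pos k : (l <= k)%nat -> 0 < rho k.
Proof.
  intros H. unfold rho, P. rewrite shift_seq_ge by exact H.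
  apply Rdiv_lt_0_compat; [apply bessel_term_pos; assumption | apply Q_pos].
Qed.

(* [(k + 1) (k + nu2 + 1) = (k - l + 1) (k + l + nu2 + 1) + l (l + nu2)]. *)
Let rho_succ k : (l <= k)%nat -> rho (S k) = rho k * ratio k.
Proof.
  intros H. unfold rho, ratio, P, Q. rewrite !shift_seq_ge by lia.
  replace (S k - l)%nat with (S (k - l)) by lia.
  rewrite !bessel_term_succ, minus_INR by assumption.
  replace nu1 with (nu2 + 2 * INR l) by lra.
  pose proof (le_INR _ _ H). pose proof (pos_INR k). pose proof (pos_INR l).
  pose proof (bessel_term_pos a1 (nu2 + 2 * INR l) (k - l) a1_pos ltac:(lra)).
  pose proof (bessel_term_pos a2 nu2 k a2_pos nu2_gt).
  field. repeat split; lra.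
Qed.

Let ratio_decr k : (l <= k)%nat -> ratio (S k) <= ratio k.
Proof.
  intros H. unfold ratio. rewrite S_INR.
  pose proof (le_INR _ _ H). assert (1 <= INR l) by (apply (le_INR 1); lia).
  assert (HD : 0 <= INR l * (INR l + nu2)) by nra.
  apply Rmult_le_compat_l; [apply pow2_ge_0|]. apply Rplus_le_compat_l.
  apply Rmult_le_compat_l; [exact HD|]. apply Rinv_le_contravar; nra.
Qed.

Lemma nuttall_diff_coef_pos_iff c k :
  0 < nuttall_diff_coef c k <-> c * exp (- a2 ^ 2 / 2) / exp (- a1 ^ 2 / 2) < rho k.
Proof.
  pose proof (exp_pos (- a1 ^ 2 / 2)) as E1. pose proof (Q_pos k) as HQ.
  assert (Hd : nuttall_diff_coef c k =
    exp (- a1 ^ 2 / 2) * Q k * (rho k - c * exp (- a2 ^ 2 / 2) / exp (- a1 ^ 2 / 2)))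
    by (unfold nuttall_diff_coef, rho; field; lra).
  rewrite Hd. assert (0 < exp (- a1 ^ 2 / 2) * Q k) by nra.
  split; intros Hs; [apply Rnot_le_lt; intros Hs'|]; nra.
Qed.

Lemma nuttall_diff_coef_pos_convex c i j k : (i <= j <= k)%nat ->
  0 < nuttall_diff_coef c i -> 0 < nuttall_diff_coef c k -> 0 < nuttall_diff_coef c j.
Proof.
  rewrite !nuttall_diff_coef_pos_iff.
  apply (rho_superlevel_convex rho ratio l rho_before rho_pos rho_succ ratio_decr).
Qed.

Lemma nuttall_diff_pos_convex c x y z : 0 < x -> x < y < z ->
  0 < nuttall_diff c x -> 0 < nuttall_diff c z -> 0 < nuttall_diff c y.
Proof.
  intros Hx Hxyz.
  assert (Hsign : forall t, 0 < t -> 0 < nuttall_diff c t <->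
            0 < Series (fun k => nuttall_diff_coef c k * (t ^ 2) ^ k)).
  { intros t Ht. rewrite nuttall_diff_series by exact Ht.
    assert (0 < exp (- t ^ 2 / 2) * Rpower t nu2)
      by (apply Rmult_lt_0_compat; [apply exp_pos | apply Rpower_gt0]).
    split; intros Hs; [apply Rnot_le_lt; intros Hs'|]; nra. }
  rewrite !Hsign by lra.
  apply (power_series_pos_convex _ (nuttall_diff_coef_pos_convex c)
           (fun y _ => ex_series_nuttall_diff_coef c y)); nra.
Qed.

Lemma nuttall_diff_continuous c x : 0 < x -> continuous (nuttall_diff c) x.
Proof.
  intros Hx.
  assert (Hk : forall nu a, -1 < nu -> 0 < a ->
            continuous (fun x => exp (- (x ^ 2 + a ^ 2) / 2) * BesselI nu (a * x)) x).
  { intros nu a Hnu Ha.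
    apply (continuous_mult (K := R_AbsRing) (fun x => exp (- (x ^ 2 + a ^ 2) / 2))).
    - apply (ex_derive_continuous (K := R_AbsRing) (V := R_NormedModule)). auto_derive. auto.
    - apply (continuous_comp (fun x => a * x) (BesselI nu)).
      + apply (ex_derive_continuous (K := R_AbsRing) (V := R_NormedModule)). auto_derive. auto.
      + apply BesselI_continuous; nra. }
  apply (continuous_minus (V := R_NormedModule)); [now apply Hk|].
  apply (continuous_scal_r (K := R_AbsRing) (V := R_NormedModule)). now apply Hk.
Qed.

Lemma nuttall_diff_mellin b c mu : 0 <= b -> 0 < mu ->
  is_RInt_gen (fun x => Rpower x mu * nuttall_diff c x) (at_right b) (Rbar_locally p_infty)
    (NuttallQ mu nu1 a1 b - c * NuttallQ mu nu2 a2 b).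
Proof.
  intros Hb Hmu.
  pose proof (is_RInt_gen_minus _ _ _ _ (proj1 (NuttallQ_spec mu nu1 a1 b Hb Hmu nu1_gt a1_pos))
    (is_RInt_gen_scal _ c _ (proj1 (NuttallQ_spec mu nu2 a2 b Hb Hmu nu2_gt a2_pos)))) as H.
  eapply is_RInt_gen_ext; [|exact H].
  apply filter_prod_at_right_pinfty. intros x y _ _ z _.
  unfold nuttall_integrand, nuttall_diff, minus, plus, opp, scal; simpl. unfold mult; simpl. ring.
Qed.

Lemma NuttallQ_ratio_no_valley b m1 m2 m3 : 0 <= b -> 0 < m1 -> m1 < m2 < m3 ->
  let f := fun mu => NuttallQ mu nu1 a1 b / NuttallQ mu nu2 a2 b in
  ~ (f m2 < f m1 /\ f m2 < f m3).
Proof.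
  intros Hb Hm1 Hm123 f [H1 H3].
  set (c := (f m2 + Rmin (f m1) (f m3)) / 2).
  assert (Hc1 : c < f m1) by (unfold c; pose proof (Rmin_l (f m1) (f m3)); pose proof (Rmin_glb_lt _ _ _ H1 H3); lra).
  assert (Hc3 : c < f m3) by (unfold c; pose proof (Rmin_r (f m1) (f m3)); pose proof (Rmin_glb_lt _ _ _ H1 H3); lra).
  assert (Hc2 : f m2 < c) by (unfold c; pose proof (Rmin_glb_lt _ _ _ H1 H3); lra).
  set (J := fun mu => NuttallQ mu nu1 a1 b - c * NuttallQ mu nu2 a2 b).
  assert (HJ : forall mu, 0 < mu -> J mu = NuttallQ mu nu2 a2 b * (f mu - c)).
  { intros mu Hmu. pose proof (proj2 (NuttallQ_spec mu nu2 a2 b Hb Hmu nu2_gt a2_pos)).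
    unfold J, f. field. lra. }
  pose proof (proj2 (NuttallQ_spec m1 nu2 a2 b Hb Hm1 nu2_gt a2_pos)).
  pose proof (proj2 (NuttallQ_spec m2 nu2 a2 b Hb ltac:(lra) nu2_gt a2_pos)).
  pose proof (proj2 (NuttallQ_spec m3 nu2 a2 b Hb ltac:(lra) nu2_gt a2_pos)).
  assert (HJ2 : 0 <= J m2).
  { apply (mellin_no_negative_dip b (nuttall_diff c) J Hb) with m1 m3.
    - intros x Hx. apply nuttall_diff_continuous. lra.
    - intros x y z Hx. apply nuttall_diff_pos_convex. lra.
    - intros mu Hmu. exact (nuttall_diff_mellin b c mu Hb Hmu).
    - exact Hm1.
    - exact Hm123.
    - rewrite HJ by lra. nra.
    - rewrite HJ by lra. nra. }
  rewrite HJ in HJ2 by lra. nra.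
Qed.

End NuttallDifference.

Lemma continuous_ge_of_between (f : R -> R) c x M : continuous f c -> x <> c ->
  (forall z, Rmin x c < z < Rmax x c -> M <= f z) -> M <= f c.
Proof.
  intros Hc Hx Hz. apply Rnot_lt_le. intros Hlt. assert (Heps : 0 < M - f c) by lra.
  destruct (proj1 (filterlim_locally (F := locally c) f (f c)) Hc (mkposreal _ Heps)) as [d Hd].
  pose proof (cond_pos d).
  set (h := Rmin d (Rabs (x - c)) / 2).
  assert (Hh : 0 < Rmin d (Rabs (x - c))) by (apply Rmin_glb_lt; [lra | apply Rabs_pos_lt; lra]).
  pose proof (Rmin_l d (Rabs (x - c))). pose proof (Rmin_r d (Rabs (x - c))).
  set (z := if Rlt_dec x c then c - h else c + h).
  assert (Hzc : Rabs (z - c) < d).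
  { unfold z, h. destruct (Rlt_dec x c); [rewrite Rabs_left | rewrite Rabs_right]; lra. }
  assert (Hbetween : Rmin x c < z < Rmax x c).
  { unfold z, h. destruct (Rlt_dec x c).
    - rewrite Rmin_left, Rmax_right, Rabs_left in * by lra. lra.
    - rewrite Rmin_right, Rmax_left, Rabs_right in * by lra. lra. }
  specialize (Hd z Hzc). change (Rabs (f z - f c) < M - f c) in Hd.
  apply Rabs_lt_between in Hd. specialize (Hz z Hbetween). lra.
Qed.

Section NoValley.

Variable f : R -> R.
Hypothesis f_no_valley : forall x y z, 0 < x -> x < y < z -> ~ (f y < f x /\ f y < f z).
Hypothesis f_cont : forall x, 0 < x -> continuous f x.

Let dropped y := 0 < y /\ exists x, 0 < x < y /\ f y < f x.

Lemma dropped_nonincreasing y z : dropped y -> y <= z -> f z <= f y.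
Proof.
  intros (Hy & x & Hx & Hf) Hyz. destruct (Req_dec y z) as [<-|Hne]; [lra|].
  apply Rnot_lt_le. intros h. apply (f_no_valley x y z); lra.
Qed.

Lemma dropped_upward y z : dropped y -> y <= z -> dropped z.
Proof.
  intros Dy Hyz. pose proof (dropped_nonincreasing y z Dy Hyz).
  destruct Dy as (Hy & x & Hx & Hf). split; [lra|]. exists x. split; lra.
Qed.

Lemma not_dropped_nondecreasing x y : 0 < x -> x <= y -> ~ dropped y -> f x <= f y.
Proof.
  intros Hx Hxy Hn. destruct (Req_dec x y) as [<-|Hne]; [lra|].
  apply Rnot_lt_le. intros h. apply Hn. split; [lra|]. exists x. split; lra.
Qed.

Lemma unimodal_of_no_valley : unimodal_on f (fun mu => 0 < mu).
Proof.
  destruct (classic (exists y, dropped y)) as [[y0 Dy0]|Hnone].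
  2: { exists 0. right. split; [intros; lra|].
       intros x y Hx _ _ Hxy. apply not_dropped_nondecreasing; auto.
       intros Dy. apply Hnone. now exists y. }
  destruct (Glb_Rbar_correct dropped) as [Hlb Hglb].
  assert (H0 : Rbar_le 0 (Glb_Rbar dropped)) by (apply Hglb; intros y [Hy _]; simpl; lra).
  assert (Hy0 := Hlb y0 Dy0).
  destruct (Glb_Rbar dropped) as [c| |] eqn:Ec; simpl in H0, Hy0; try contradiction.
  assert (Hbelow : forall y, y < c -> ~ dropped y) by (intros y Hy Dy; specialize (Hlb y Dy); simpl in Hlb; lra).
  assert (Habove : forall y, c < y -> dropped y).
  { intros y Hy. assert (Hy' : Rbar_lt (Glb_Rbar dropped) y) by (rewrite Ec; exact Hy).
    destruct (Glb_Rbar_lt_witness dropped y Hy') as (r & Dr & Hr).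
    apply (dropped_upward r y Dr). lra. }
  exists c. left. split.
  - intros x y Hx Hy Hxy Hyc. destruct (Rlt_or_le y c) as [Hlt|Hge].
    { apply not_dropped_nondecreasing; auto. }
    replace y with c by lra. destruct (Req_dec x c) as [->|Hne]; [lra|].
    apply (continuous_ge_of_between f c x); [apply f_cont; lra | exact Hne|].
    intros z Hz. rewrite Rmin_left, Rmax_right in Hz by lra.
    apply not_dropped_nondecreasing; [lra | lra | apply Hbelow; lra].
  - intros x y Hx Hy Hcx Hxy. destruct (Rlt_or_le c x) as [Hlt|Hle].
    { apply dropped_nonincreasing; auto. }
    replace x with c by lra. destruct (Req_dec y c) as [->|Hne]; [lra|].
    apply (continuous_ge_of_between f c y); [apply f_cont; lra | exact Hne|].
    intros z Hz. rewrite Rmin_right, Rmax_left in Hz by lra.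
    apply dropped_nonincreasing; [apply Habove | ]; lra.
Qed.

End NoValley.

Theorem theorem6 (b nu1 nu2 a1 a2 : R) (l : nat) :
  0 <= b -> -1 < nu1 -> -1 < nu2 -> (0 < l)%nat -> nu1 - nu2 = 2 * INR l ->
  0 < a1 -> a1 <= a2 ->
  unimodal_on (fun mu => NuttallQ mu nu1 a1 b / NuttallQ mu nu2 a2 b) (fun mu => 0 < mu).
Proof.
  intros Hb Hnu1 Hnu2 Hl Hgap Ha1 Ha12.
  (* The hypothesis [a1 <= a2] is only used to make [a2] positive. *)
  assert (Ha2 : 0 < a2) by lra.
  apply unimodal_of_no_valley.
  - intros x y z Hx Hxyz.
    exact (NuttallQ_ratio_no_valley nu1 nu2 a1 a2 l Hnu1 Hnu2 Hl Hgap Ha1 Ha2 b x y z Hb Hx Hxyz).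
  - intros mu Hmu. now apply NuttallQ_ratio_continuous.
Qed.
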